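(* Let $\sigma\in\,]-\tfrac32,\tfrac12[$, $\sigma\neq-\tfrac12$, and let $(\lambda,\zeta)\in\mathbb{S}\times(\mathbb{Z}^2\setminus\{0\})$, $\zeta=(\xi,\eta)$, $\omega^2=\lambda+\nu|\zeta|^2$. The operator $$\mathcal{L}_0:\ (H^{\sigma+2}_\zeta)^2_{\mathrm{div}}\times\mathbb{C}\times H^{\sigma+2}_\zeta\to (H^{\sigma}_\zeta)^3,\qquad (u,v,p_0,\theta)\mapsto \begin{pmatrix}(\omega^2-\nu\partial_{zz})u+i\xi p_0\\ (\omega^2-\nu\partial_{zz})v+i\eta p_0\\ (\omega^2-\nu\partial_{zz})\theta\end{pmatrix}=\begin{pmatrix}f_1\\ f_2\\ f_3\end{pmatrix}$$ is continuous and bijective. Moreover $Y=(u,v)$ splits as $Y=Y_1+Y_2$ and, writing $F=(f_1,f_2)$, the following estimates hold with a constant $C$ independent of $(\lambda,\zeta)$: $$\begin{array}{lrcl} (a)&|\zeta|\,|p_0| &\leq& C\langle\omega\rangle^2 M_\sigma \|F\|_{\sigma,\zeta},\\ (b)&M_{-\sigma-2}[M_{-\sigma}]^{-1}\|Y_1\|_{\sigma,\zeta} + \|Y_1\|_{\sigma+2,\zeta} &\leq& C \langle\omega\rangle^2 M_\sigma M_{-\sigma-2}\|F\|_{\sigma,\zeta},\\ (c)&\langle\omega\rangle^2 \|Y_2\|_{\sigma,\zeta} + \|Y_2\|_{\sigma+2,\zeta} &\leq& C \|F\|_{\sigma,\zeta},\\ (d)& \langle\omega\rangle^2 \|\theta\|_{\sigma,\zeta}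 + \|\theta\|_{\sigma+2,\zeta} &\leq& C \|f_{3}\|_{\sigma,\zeta}. \end{array}$$
   Context: Let $a>0$, $\nu>0$, $\alpha,\beta,\gamma>0$ constants, $\Omega=\mathbb{T}^2\times(0,a)$. For $\zeta\in\mathbb{Z}^2\setminus\{0\}$ and $s\in\mathbb{R}$, $H^s_\zeta$ is the Hilbert space of functions $f(z)=\sum_{k\ge1}f_k e_k(z)$ on $(0,a)$, $e_k(z)=\sqrt{2/a}\sin(k\pi z/a)$, with norm $\|f\|_{s,\zeta}^2=\sum_{k\ge1}(1+\nu k^2+\nu|\zeta|^2)^s|f_k|^2$ (the same notation is used for the product norms on $(H^s_\zeta)^2$, $(H^s_\zeta)^3$), and $(H^{\sigma+2}_\zeta)^2_{\mathrm{div}}=\{(u,v)\in(H^{\sigma+2}_\zeta)^2:\int_0^a(\xi u+\eta v)\,dz=0\}$. Set $\langle\zeta\rangle=1+|\zeta|$, $\langle\omega\rangle^2=|\lambda|+\langle\zeta\rangle^2$ and $M_s(\lambda,\zeta)=\big(\sum_{k\ge1}\frac{1}{k^2(k^4+\langle\omega\rangle^4)(k^2+\langle\zeta\rangle^2)^s}\big)^{1/2}$ (defined for $s>-\tfrac52$). The set $\mathbb{S}=\{-\delta_2-\mu_1+i\mu_2:(\mu_1,\mu_2)\in\mathbb{R}^2,\ |\mu_2|\ge\mu_1/\delta_1\}$, where $0<\delta_2<\min(\frac{\nu\pi^2}{2a^2},\frac{\nu}{2})$ and $\delta_1>0$ is chosen small enough that $\mathbb{S}$ contains no eigenvalue of $-P$.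 Here $P$ is the linear Primitive Equations operator: with $\mathcal{H}$ (resp. $\mathcal{V}$) the closure in $L^2$ (resp. $H^1$) of smooth triples $X=(u,v,\theta)$ periodic in $x,y$, vanishing at $z=0,a$ and with $\int_0^a(\partial_x u+\partial_y v)dz=0$, inner products $(X,X')_{\mathcal{H}}=\int_\Omega(u\bar u'+v\bar v'+\frac{\beta}{\gamma}\theta\bar\theta')$, $(X,X')_{\mathcal{V}}=\int_\Omega(\nabla u\cdot\nabla\bar u'+\nabla v\cdot\nabla\bar v'+\frac{\beta}{\gamma}\nabla\theta\cdot\nabla\bar\theta')$, $w=-\int_0^z(\partial_xu+\partial_yv)$, $B(X,X')=-(\theta,w')_{L^2}+(w,\theta')_{L^2}$, $C(X,X')=-(v,u')_{L^2}+(u,v')_{L^2}$; $\lambda$ is an eigenvalue of $-P$ if there is $X\in\mathcal{V}\setminus\{0\}$ with $\lambda(X,X')_{\mathcal{H}}+\nu(X,X')_{\mathcal{V}}+\beta B(X,X')+\alpha C(X,X')=0$ for all $X'\in\mathcal{V}$. (Such a $\delta_1$ exists since all these eigenvalues satisfy $\Re\lambda\le-\nu\pi^2/a^2$ and $|\Im\lambda|\le2\alpha+2a\sqrt{\beta\gamma}\sqrt{-\Re\lambda/\nu}$.) *)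

From Stdlib Require Import Reals ZArith.
From Coquelicot Require Import Coquelicot.
Open Scope R_scope.

(* Coefficient sequences: f : nat -> C, the entry f n is the coefficient
   f_k of e_k with k = n+1 (so the index k >= 1). *)
Definition kR (n : nat) : R := INR (S n).

Definition ek (a : R) (n : nat) (z : R) : R := sqrt (2 / a) * sin (kR n * PI * z / a).

(* c_k = int_0^a e_k dz : the k-th coefficient of the constant function 1 *)
Definition one_coef (a : R) (n : nat) : R := RInt (ek a n) 0 a.

Definition zeta_sq (xi eta : Z) : R := IZR xi ^ 2 + IZR eta ^ 2.
Definition zeta_abs (xi eta : Z) : R := sqrt (zeta_sq xi eta).

Definition weight (nu : R) (xi eta : Z) (n : nat) : R :=
  1 + nu * kR n ^ 2 + nu * zeta_sq xi eta.

Definition hterm (nu : R) (xi eta : Z) (s : R) (f : nat -> C) (n : nat) : R :=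
  Rpower (weight nu xi eta n) s * Cmod (f n) ^ 2.

Definition inH (nu : R) (xi eta : Z) (s : R) (f : nat -> C) : Prop :=
  ex_series (hterm nu xi eta s f).

Definition hsq (nu : R) (xi eta : Z) (s : R) (f : nat -> C) : R :=
  Series (hterm nu xi eta s f).
Definition hnorm (nu : R) (xi eta : Z) (s : R) (f : nat -> C) : R :=
  sqrt (hsq nu xi eta s f).
Definition hnorm2 (nu : R) (xi eta : Z) (s : R) (u v : nat -> C) : R :=
  sqrt (hsq nu xi eta s u + hsq nu xi eta s v).
Definition hnorm3 (nu : R) (xi eta : Z) (s : R) (u v t : nat -> C) : R :=
  sqrt (hsq nu xi eta s u + hsq nu xi eta s v + hsq nu xi eta s t).

Definition seq_sub (f g : nat -> C) : nat -> C := fun n => Cminus (f n) (g n).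
Definition seq_add (f g : nat -> C) : nat -> C := fun n => Cplus (f n) (g n).

(* divergence condition  int_0^a (xi u + eta v) dz = 0, i.e.
   sum_k c_k (xi u_k + eta v_k) = 0 *)
Definition div_free (a : R) (xi eta : Z) (u v : nat -> C) : Prop :=
  is_series (fun n => Cmult (RtoC (one_coef a n))
                        (Cplus (Cmult (RtoC (IZR xi)) (u n)) (Cmult (RtoC (IZR eta)) (v n))))
            (RtoC 0).

Definition in_S (d1 d2 : R) (l : C) : Prop :=
  exists mu1 mu2 : R, l = ((- d2 - mu1)%R, mu2) /\ Rabs mu2 >= mu1 / d1.

Definition omega_sq (nu : R) (xi eta : Z) (l : C) : C :=
  Cplus l (RtoC (nu * zeta_sq xi eta)).

Definition jzeta (xi eta : Z) : R := 1 + zeta_abs xi eta.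
Definition jomega_sq (xi eta : Z) (l : C) : R := Cmod l + jzeta xi eta ^ 2.

Definition Ms (xi eta : Z) (l : C) (s : R) : R :=
  sqrt (Series (fun n => / (kR n ^ 2 * (kR n ^ 4 + jomega_sq xi eta l ^ 2)
                            * Rpower (kR n ^ 2 + jzeta xi eta ^ 2) s))).

(* symbol of omega^2 - nu d_zz on e_k : omega^2 + nu (k pi / a)^2 *)
Definition symb (a nu : R) (xi eta : Z) (l : C) (n : nat) : C :=
  Cplus (omega_sq nu xi eta l) (RtoC (nu * (kR n * PI / a) ^ 2)).

Definition L0_1 (a nu : R) (xi eta : Z) (l : C) (u : nat -> C) (p0 : C) : nat -> C :=
  fun n => Cplus (Cmult (symb a nu xi eta l n) (u n))
                 (Cmult (Cmult Ci (RtoC (IZR xi))) (Cmult p0 (RtoC (one_coef a n)))).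
Definition L0_2 (a nu : R) (xi eta : Z) (l : C) (v : nat -> C) (p0 : C) : nat -> C :=
  fun n => Cplus (Cmult (symb a nu xi eta l n) (v n))
                 (Cmult (Cmult Ci (RtoC (IZR eta))) (Cmult p0 (RtoC (one_coef a n)))).
Definition L0_3 (a nu : R) (xi eta : Z) (l : C) (t : nat -> C) : nat -> C :=
  fun n => Cmult (symb a nu xi eta l n) (t n).

Definition in_dom (a nu : R) (xi eta : Z) (sg : R) (u v : nat -> C) (t : nat -> C) : Prop :=
  inH nu xi eta (sg + 2) u /\ inH nu xi eta (sg + 2) v /\ div_free a xi eta u v
  /\ inH nu xi eta (sg + 2) t.

Definition dom_norm (nu : R) (xi eta : Z) (sg : R) (u v : nat -> C) (p0 : C) (t : nat -> C) : R :=
  sqrt (hsq nu xi eta (sg + 2) u + hsq nu xi eta (sg + 2) v + Cmod p0 ^ 2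
        + hsq nu xi eta (sg + 2) t).

(* Diagonalizing [omega^2 - nu d_zz] in the sine basis, [L0] acts on the k-th coefficients as
   multiplication by the symbol [s_k = omega^2 + nu (k pi / a)^2], plus the pressure term
   [i (xi, eta) p0 c_k], where [c_k] are the coefficients of the constant function 1.  For
   [lambda] in [S] the symbol is comparable to [|lambda| + nu |zeta|^2 + nu (k pi / a)^2], so
   [u = (f1 - i xi p0 c) / s], [v = (f2 - i eta p0 c) / s], [theta = f3 / s], and the pressure
   is fixed by the divergence condition:
     [i p0 |zeta|^2 sum_k c_k^2 / s_k = sum_k c_k (xi f1_k + eta f2_k) / s_k].
   Cauchy-Schwarz in the [H^sigma]/[H^-sigma] duality bounds the right-hand side by
   [M_sigma |zeta| ||F||], while the real part of a suitable rotation of the left-hand series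
   has nonnegative terms, so its first term bounds [|sum_k c_k^2 / s_k|] below by a multiple
   of [<omega>^-2].  This gives (a); (b) is the size of the pressure part [-i p0 (xi, eta) c / s]
   of [Y], and (c), (d) hold because [|s_k|] dominates both [<omega>^2] and the weight
   [1 + nu k^2 + nu |zeta|^2]. *)

From Stdlib Require Import Reals ZArith Lra Lia Psatz FunctionalExtensionality.
From Coquelicot Require Import Coquelicot.
Open Scope R_scope.

Lemma kR_ge1 n : 1 <= kR n.
Proof. unfold kR. rewrite S_INR. pose proof (pos_INR n). lra. Qed.

Lemma kR_S n : kR (S n) = kR n + 1.
Proof. unfold kR. rewrite (S_INR (S n)). reflexivity. Qed.

Lemma Rpower_pos x t : 0 < Rpower x t.
Proof. apply exp_pos. Qed.

Lemma Rpower_plus_2 x s : 0 < x -> Rpower x (s + 2) = Rpower x s * x ^ 2.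
Proof.
  intros hx. rewrite Rpower_plus, <- (Rpower_pow 2 x hx). reflexivity.
Qed.

Lemma Rpower_le_between W B c1 c2 t : 0 < c1 -> 0 < B -> c1 * B <= W <= c2 * B ->
  Rpower W t <= (Rpower c1 t + Rpower c2 t) * Rpower B t.
Proof.
  intros hc1 hB [h1 h2].
  assert (hW : 0 < W) by nra. assert (hc2 : 0 < c2) by nra.
  pose proof (Rpower_pos c1 t). pose proof (Rpower_pos c2 t). pose proof (Rpower_pos B t).
  destruct (Rle_dec 0 t) as [ht|ht].
  - apply Rle_trans with (Rpower c2 t * Rpower B t); [|nra].
    rewrite Rpower_mult_distr by lra. apply Rle_Rpower_l; lra.
  - apply Rle_trans with (Rpower c1 t * Rpower B t); [|nra].
    rewrite Rpower_mult_distr by lra.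
    assert (e : forall x, Rpower x t = / Rpower x (- t)).
    { intro x. rewrite <- Rpower_Ropp. f_equal. ring. }
    rewrite (e W), (e (c1 * B)).
    apply Rinv_le_contravar; [apply Rpower_pos|].
    apply Rle_Rpower_l; [lra|]. split; nra.
Qed.

Lemma sq_mul_div_sq_le X K M P F : 0 <= X -> 0 < M -> 0 <= P -> X <= K * M ->
  X ^ 2 * (P * (F / M) ^ 2) <= K ^ 2 * (P * F ^ 2).
Proof.
  intros hX hM hP h.
  replace (X ^ 2 * (P * (F / M) ^ 2)) with (P * F ^ 2 * (X / M) ^ 2) by (field; lra).
  replace (K ^ 2 * (P * F ^ 2)) with (P * F ^ 2 * K ^ 2) by ring.
  apply Rmult_le_compat_l; [pose proof (pow2_ge_0 F); nra|].
  apply pow_incr. split; [apply Rdiv_le_0_compat; lra|].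
  apply (Rmult_le_reg_r M); [exact hM|]. replace (X / M * M) with X by (field; lra). exact h.
Qed.

Lemma sqrt_le_scal X Y K : 0 <= Y -> 0 <= K -> X <= K ^ 2 * Y -> sqrt X <= K * sqrt Y.
Proof.
  intros hY hK h. rewrite <- (sqrt_pow2 K), <- sqrt_mult by (auto; apply pow2_ge_0).
  apply sqrt_le_1_alt. exact h.
Qed.

Lemma Cmod_le_abs_re_im (z : C) : Cmod z <= Rabs (fst z) + Rabs (snd z).
Proof.
  destruct z as [x y]. unfold Cmod. simpl fst. simpl snd.
  pose proof (Rabs_pos x); pose proof (Rabs_pos y).
  rewrite <- (sqrt_Rsqr (Rabs x + Rabs y)) by lra.
  apply sqrt_le_1_alt. unfold Rsqr.
  rewrite <- (pow2_abs x), <- (pow2_abs y). nra.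
Qed.

Lemma Rabs_fst_le_Cmod z : Rabs (fst z) <= Cmod z.
Proof. exact (re_le_Cmod z). Qed.

Lemma Rabs_snd_le_Cmod z : Rabs (snd z) <= Cmod z.
Proof. pose proof (Rmax_Cmod z). pose proof (Rmax_r (Rabs (fst z)) (Rabs (snd z))). lra. Qed.

Lemma Cmod_plus_sq_le (x y : C) : Cmod (x + y) ^ 2 <= 2 * Cmod x ^ 2 + 2 * Cmod y ^ 2.
Proof.
  pose proof (Cmod_triangle x y).
  pose proof (Cmod_ge_0 (x + y)). pose proof (Cmod_ge_0 x). pose proof (Cmod_ge_0 y).
  assert (Cmod (x + y) ^ 2 <= (Cmod x + Cmod y) ^ 2) by (apply pow_incr; lra).
  pose proof (pow2_ge_0 (Cmod x - Cmod y)). nra.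
Qed.

Lemma Cmod_minus_sq_le (x y : C) : Cmod (x - y) ^ 2 <= 2 * Cmod x ^ 2 + 2 * Cmod y ^ 2.
Proof. unfold Cminus. rewrite <- (Cmod_opp y). apply Cmod_plus_sq_le. Qed.

Lemma exists_sign y : exists b, b * y = Rabs y /\ b * b = 1.
Proof.
  destruct (Rle_dec 0 y).
  - exists 1. rewrite Rabs_right by lra. lra.
  - exists (-1). rewrite Rabs_left by lra. lra.
Qed.

Lemma Series_nonneg (u : nat -> R) : (forall n, 0 <= u n) -> ex_series u -> 0 <= Series u.
Proof.
  intros hu he. rewrite <- (Rmult_0_l (Series u)), <- Series_scal_l.
  apply Series_le; [|exact he]. intro n. specialize (hu n). lra.
Qed.

Lemma is_series_le (u v : nat -> R) lu lv :
  is_series u lu -> is_series v lv -> (forall n, u n <= v n) -> lu <= lv.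
Proof.
  intros hu hv huv.
  assert (hm : is_series (fun n => v n - u n) (lv - lu)) by exact (is_series_minus v u lv lu hv hu).
  pose proof (Series_nonneg (fun n => v n - u n) ltac:(intro n; specialize (huv n); lra)
                (ex_intro _ _ hm)) as h.
  rewrite (is_series_unique _ _ hm) in h. lra.
Qed.

Lemma series_le_scal (u v : nat -> R) K :
  (forall n, 0 <= u n <= K * v n) -> ex_series v -> ex_series u /\ Series u <= K * Series v.
Proof.
  intros h hv.
  assert (hKv : ex_series (fun n => K * v n)).
  { apply (ex_series_ext (fun n => v n * K)); [intro; apply Rmult_comm|].
    apply ex_series_scal_r, hv. }
  split.
  - apply (ex_series_le (V := R_CompleteNormedModule) _ (fun n => K * v n)); [intro n|exact hKv].
    change (norm (u n)) with (Rabs (u n)). rewrite Rabs_right; [apply h|apply Rle_ge, h].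
  - rewrite <- Series_scal_l. apply Series_le; auto.
Qed.

Lemma series_le_lin (u v w : nat -> R) al be :
  (forall n, 0 <= u n <= al * v n + be * w n) -> ex_series v -> ex_series w ->
  ex_series u /\ Series u <= al * Series v + be * Series w.
Proof.
  intros h hv hw.
  assert (hscal : forall c f, ex_series f -> ex_series (fun n => c * f n)).
  { intros c f hf. apply (ex_series_ext (fun n => f n * c)); [intro; apply Rmult_comm|].
    apply ex_series_scal_r, hf. }
  assert (hs : ex_series (fun n => al * v n + be * w n))
    by (apply (ex_series_plus (V := R_NormedModule)); auto).
  destruct (series_le_scal u _ 1 ltac:(intro n; rewrite Rmult_1_l; apply h) hs) as [h1 h2].
  split; [exact h1|]. rewrite Series_plus, !Series_scal_l in h2 by auto. lra.
Qed.

Lemma le_sqrt_of_AM_GM A B X : 0 <= A -> 0 <= B ->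
  (forall t, 0 < t -> 2 * X <= A / t + t * B) -> X <= sqrt (A * B).
Proof.
  intros hA hB h.
  destruct (Rle_dec X 0) as [hX|hX]; [pose proof (sqrt_pos (A * B)); lra|].
  destruct (Req_dec B 0) as [hB0|hB0].
  - (* t = 2A/X + 1 contradicts X > 0 *)
    exfalso. assert (hAX : 0 <= A / X) by (apply Rdiv_le_0_compat; lra).
    specialize (h (2 * (A / X) + 1) ltac:(lra)).
    rewrite hB0, Rmult_0_r, Rplus_0_r in h.
    apply (Rmult_le_compat_r (2 * (A / X) + 1)) in h; [|lra].
    replace (A / (2 * (A / X) + 1) * (2 * (A / X) + 1)) with A in h by (field; lra).
    replace (2 * X * (2 * (A / X) + 1)) with (4 * A + 2 * X) in h by (field; lra). lra.
  - specialize (h (X / B) ltac:(apply Rdiv_lt_0_compat; lra)).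
    replace (X / B * B) with X in h by (field; lra).
    replace (A / (X / B)) with (A * B / X) in h by (field; split; lra).
    assert (hXX : X * X <= A * B).
    { assert (hle : X <= A * B / X) by lra.
      apply (Rmult_le_compat_r X) in hle; [|lra].
      replace (A * B / X * X) with (A * B) in hle by (field; lra). lra. }
    rewrite <- (sqrt_square X) by lra. apply sqrt_le_1_alt, hXX.
Qed.

Lemma series_cauchy_schwarz (p q r : nat -> R) :
  (forall n, 0 <= p n) -> (forall n, 0 <= q n) -> (forall n, 0 <= r n /\ r n ^ 2 <= p n * q n) ->
  ex_series p -> ex_series q -> ex_series r /\ Series r <= sqrt (Series p * Series q).
Proof.
  intros hp hq hr hep heq.
  assert (hpt : forall t n, 0 < t -> 0 <= 2 * r n <= / t * p n + t * q n).
  { intros t n ht. destruct (hr n) as [hr0 hr2]. specialize (hp n). specialize (hq n).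
    assert (0 <= / t * p n) by (apply Rmult_le_pos; [apply Rlt_le, Rinv_0_lt_compat|]; lra).
    assert (e : (/ t * p n + t * q n) ^ 2 = (/ t * p n - t * q n) ^ 2 + 4 * (p n * q n)).
    { field. lra. }
    pose proof (pow2_ge_0 (/ t * p n - t * q n)).
    assert (0 <= t * q n) by nra.
    split; [lra|]. apply Rsqr_incr_0_var; [unfold Rsqr; nra|lra]. }
  destruct (series_le_lin (fun n => 2 * r n) p q (/ 1) 1 (fun n => hpt 1 n Rlt_0_1) hep heq)
    as [h2r _].
  assert (hr' : ex_series r).
  { apply (ex_series_ext (fun n => 2 * r n * / 2)); [intro; simpl; field|].
    apply ex_series_scal_r, h2r. }
  split; [exact hr'|].
  apply le_sqrt_of_AM_GM; try (apply Series_nonneg; auto).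
  intros t ht. rewrite <- Series_scal_l.
  destruct (series_le_lin (fun n => 2 * r n) p q (/ t) t ltac:(intro n; apply hpt; lra) hep heq)
    as [_ h]. unfold Rdiv. lra.
Qed.

Lemma ex_series_nonneg_telescope (u g : nat -> R) :
  (forall n, 0 <= u n <= g n - g (S n)) -> (forall n, 0 <= g n) -> ex_series u.
Proof.
  intros hu hg. apply ex_series_Reals_1, growing_cv.
  - intro n. simpl. specialize (hu (S n)). lra.
  - assert (hsum : forall N, sum_f_R0 u N <= g 0%nat - g (S N)).
    { intro N. induction N as [|N IH]; simpl; [apply hu|]. specialize (hu (S N)). lra. }
    exists (g 0%nat). intros x [N ->].
    specialize (hsum N). specialize (hg (S N)). lra.
Qed.

Lemma ln_le_minus_1 y : 0 < y -> ln y <= y - 1.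
Proof.
  intros hy. rewrite <- (ln_exp (y - 1)). apply ln_le; [exact hy|].
  pose proof (exp_ineq1_le (y - 1)). lra.
Qed.

(* discrete form of [x^(-1-q) = -(x^(-q))' / q] *)
Lemma Rpower_succ_le_telescope q x : 0 < q -> 1 <= x ->
  Rpower (x + 1) (- (1 + q)) <= / q * (Rpower x (- q) - Rpower (x + 1) (- q)).
Proof.
  intros hq hx. unfold Rpower.
  set (L := ln x). set (M := ln (x + 1)).
  assert (hML : / (x + 1) <= M - L).
  { unfold M, L.
    pose proof (ln_le_minus_1 (x / (x + 1)) ltac:(apply Rdiv_lt_0_compat; lra)) as hln.
    rewrite ln_div in hln by lra.
    replace (x / (x + 1) - 1) with (- / (x + 1)) in hln by (field; lra). lra. }
  assert (e1 : exp (- (1 + q) * M) = / (x + 1) * exp (- q * M)).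
  { rewrite <- (exp_ln (x + 1)) at 1 by lra. rewrite <- exp_Ropp, <- exp_plus.
    f_equal. unfold M. ring. }
  assert (e2 : exp (- q * L) = exp (q * (M - L)) * exp (- q * M)).
  { rewrite <- exp_plus. f_equal. ring. }
  rewrite e1, e2.
  pose proof (exp_ineq1_le (q * (M - L))). pose proof (exp_pos (- q * M)).
  assert (q * / (x + 1) <= q * (M - L)) by (apply Rmult_le_compat_l; lra).
  apply (Rmult_le_reg_l q); [lra|].
  replace (q * (/ q * (exp (q * (M - L)) * exp (- q * M) - exp (- q * M))))
    with ((exp (q * (M - L)) - 1) * exp (- q * M)) by (field; lra).
  rewrite <- Rmult_assoc. apply Rmult_le_compat_r; lra.
Qed.

Lemma ex_series_Rpower_kR q : 0 < q -> ex_series (fun n => Rpower (kR n) (- (1 + q))).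
Proof.
  intros hq. apply ex_series_incr_1.
  apply (ex_series_nonneg_telescope _ (fun n => / q * Rpower (kR n) (- q))).
  - intro n. split; [apply Rlt_le, Rpower_pos|].
    rewrite kR_S, <- Rmult_minus_distr_l.
    apply Rpower_succ_le_telescope; [exact hq|apply kR_ge1].
  - intro n. apply Rmult_le_pos; [apply Rlt_le, Rinv_0_lt_compat; lra|].
    apply Rlt_le, Rpower_pos.
Qed.

Lemma ex_series_inv_kR_sq : ex_series (fun n => / kR n ^ 2).
Proof.
  apply (ex_series_ext (fun n => Rpower (kR n) (- (1 + 1)))); [|apply ex_series_Rpower_kR; lra].
  intro n. pose proof (kR_ge1 n).
  rewrite Rpower_Ropp, <- (Rpower_pow 2 (kR n)) by lra. reflexivity.
Qed.

Lemma sum_n_fst (g : nat -> C) N : fst (sum_n g N) = sum_n (fun n => fst (g n)) N.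
Proof. induction N as [|N IH]; [now rewrite !sum_O|]. rewrite !sum_Sn, <- IH. reflexivity. Qed.

Lemma is_series_C_fst (g : nat -> C) l :
  is_series g l -> is_series (fun n => fst (g n)) (fst l).
Proof.
  intros h. apply (proj2 (filterlim_locally _ _)). intro eps.
  destruct (proj1 (filterlim_locally _ _) h eps) as [N hN].
  exists N. intros n hn. rewrite <- sum_n_fst. apply hN, hn.
Qed.

Lemma is_series_C_unique (g : nat -> C) l1 l2 : is_series g l1 -> is_series g l2 -> l1 = l2.
Proof. exact (filterlim_locally_unique (V := C_NormedModule) _ _ _). Qed.

Lemma ex_series_C_of_Cmod (g : nat -> C) :
  ex_series (fun n => Cmod (g n)) -> exists l, is_series g l.
Proof.
  apply (ex_series_le (V := C_CompleteNormedModule) g). intro n. right. reflexivity.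
Qed.

Lemma Cmod_is_series_le (g : nat -> C) l :
  is_series g l -> ex_series (fun n => Cmod (g n)) -> Cmod l <= Series (fun n => Cmod (g n)).
Proof.
  intros hg he.
  pose proof (Series_nonneg _ (fun n => Cmod_ge_0 (g n)) he) as hS.
  destruct (Req_dec (Cmod l) 0) as [h0|h0]; [lra|].
  (* test the series against the direction of [l] *)
  pose proof (is_series_C_fst _ _ (is_series_scal (Cconj l) g l hg)) as h1.
  pose proof (is_series_scal_l (Cmod l) _ _ (Series_correct _ he)) as h2.
  assert (hle : fst (Cconj l * l)%C <= Cmod l * Series (fun n => Cmod (g n))).
  { refine (is_series_le _ _ _ _ h1 h2 _). intro n.
    change (scal (Cmod l) (Cmod (g n))) with (Cmod l * Cmod (g n)).
    rewrite <- (Cmod_conj l), <- Cmod_mult.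
    eapply Rle_trans; [apply Rle_abs|apply re_le_Cmod]. }
  replace (fst (Cconj l * l)%C) with (Cmod l ^ 2) in hle
    by (rewrite Cmod2_alt; destruct l; simpl; ring).
  pose proof (Cmod_ge_0 l). apply (Rmult_le_reg_l (Cmod l)); lra.
Qed.

Lemma Re_head_le_of_is_series (e : C) (g : nat -> C) l :
  is_series g l -> (forall n, 0 <= fst (e * g n)%C) -> fst (e * g 0%nat)%C <= Cmod e * Cmod l.
Proof.
  intros hg hpos.
  assert (h : is_series (fun n => fst (e * g n)%C) (fst (e * l)%C))
    by exact (is_series_C_fst _ _ (is_series_scal e _ _ hg)).
  assert (hex : ex_series (fun n => fst (e * g n)%C)) by (eexists; exact h).
  pose proof (is_series_unique _ _ h) as hu. rewrite Series_incr_1 in hu by exact hex.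
  pose proof (Series_nonneg _ (fun n => hpos (S n)) (proj1 (ex_series_incr_1 _) hex)).
  rewrite <- Cmod_mult.
  pose proof (Rabs_fst_le_Cmod (e * l)%C). pose proof (Rle_abs (fst (e * l)%C)). lra.
Qed.

(** * The sine coefficients of the constant function 1 *)

Lemma one_coef_formula a n : 0 < a ->
  one_coef a n = sqrt (2 / a) * (a / (kR n * PI)) * (1 - cos (kR n * PI)).
Proof.
  intros ha. unfold one_coef.
  pose proof (kR_ge1 n) as hk. pose proof PI_RGT_0.
  set (k := kR n) in *.
  apply is_RInt_unique.
  set (F := fun z => - sqrt (2 / a) * (a / (k * PI)) * cos (k * PI * z / a)).
  replace (sqrt (2 / a) * (a / (k * PI)) * (1 - cos (k * PI))) with (minus (F a) (F 0)).
  2:{ unfold F, minus, plus, opp. simpl.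
      replace (k * PI * a / a) with (k * PI) by (field; lra).
      replace (k * PI * 0 / a) with 0 by (field; lra). rewrite cos_0. ring. }
  apply (is_RInt_derive (V := R_CompleteNormedModule) F).
  - intros x _. unfold F, ek. auto_derive; auto. unfold k, Rdiv. field.
    unfold k in hk. repeat split; lra.
  - intros y _. unfold ek. apply continuity_pt_filterlim.
    apply continuity_pt_mult; [apply continuity_pt_const; intro; auto|].
    apply (continuity_pt_comp (fun z => k * PI * z / a) sin); [reg|apply continuity_sin].
Qed.

Lemma one_coef_sq_le a n : 0 < a -> one_coef a n ^ 2 <= 8 * a / PI ^ 2 / kR n ^ 2.
Proof.
  intros ha. rewrite one_coef_formula by lra.
  pose proof (kR_ge1 n). pose proof PI_RGT_0. pose proof (COS_bound (kR n * PI)).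
  rewrite !Rpow_mult_distr, pow2_sqrt by (apply Rlt_le, Rdiv_lt_0_compat; lra).
  replace (8 * a / PI ^ 2 / kR n ^ 2) with (2 / a * (a / (kR n * PI)) ^ 2 * 4)
    by (field; lra).
  apply Rmult_le_compat_l; [|nra].
  apply Rmult_le_pos; [apply Rlt_le, Rdiv_lt_0_compat; lra|apply pow2_ge_0].
Qed.

Lemma one_coef_sq_0 a : 0 < a -> one_coef a 0 ^ 2 = 8 * a / PI ^ 2.
Proof.
  intros ha. rewrite one_coef_formula by lra. unfold kR. simpl INR.
  rewrite Rmult_1_l, cos_PI. pose proof PI_RGT_0.
  rewrite !Rpow_mult_distr, pow2_sqrt by (apply Rlt_le, Rdiv_lt_0_compat; lra).
  field. lra.
Qed.

(** * The spaces [H^s_zeta] *)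

Lemma zeta_sq_ge1 xi eta : (xi, eta) <> (0%Z, 0%Z) -> 1 <= zeta_sq xi eta.
Proof.
  intros h. unfold zeta_sq.
  assert (h' : (1 <= xi * xi + eta * eta)%Z).
  { destruct (Z.eq_dec xi 0), (Z.eq_dec eta 0); subst; try congruence; nia. }
  apply IZR_le in h'. rewrite plus_IZR, !mult_IZR in h'. simpl. lra.
Qed.

Lemma weight_pos nu xi eta n : 0 <= nu -> 0 < weight nu xi eta n.
Proof.
  intros hnu. unfold weight, zeta_sq.
  pose proof (pow2_ge_0 (kR n)). pose proof (pow2_ge_0 (IZR xi)).
  pose proof (pow2_ge_0 (IZR eta)). nra.
Qed.

Lemma seq_add_comm (f g : nat -> C) : seq_add f g = seq_add g f.
Proof. apply functional_extensionality. intro n. apply Cplus_comm. Qed.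

Section Hspace.
Variables (nu : R) (xi eta : Z) (s : R).

Lemma hterm_nonneg f n : 0 <= hterm nu xi eta s f n.
Proof. apply Rmult_le_pos; [apply Rlt_le, Rpower_pos|apply pow2_ge_0]. Qed.

Lemma hsq_nonneg f : inH nu xi eta s f -> 0 <= hsq nu xi eta s f.
Proof. apply Series_nonneg, hterm_nonneg. Qed.

Lemma hterm_scal (c : C) f n :
  hterm nu xi eta s (fun k => c * f k)%C n = Cmod c ^ 2 * hterm nu xi eta s f n.
Proof. unfold hterm. rewrite Cmod_mult. ring. Qed.

Lemma inH_scal (c : C) f : inH nu xi eta s f ->
  inH nu xi eta s (fun k => c * f k)%C /\
  hsq nu xi eta s (fun k => c * f k)%C = Cmod c ^ 2 * hsq nu xi eta s f.
Proof.
  intros hf. unfold inH, hsq. rewrite (Series_ext _ _ (hterm_scal c f)), Series_scal_l.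
  split; [|reflexivity].
  apply (ex_series_ext (fun n => hterm nu xi eta s f n * Cmod c ^ 2)).
  - intro n. rewrite hterm_scal. apply Rmult_comm.
  - apply ex_series_scal_r, hf.
Qed.

Lemma inH_plus_le (f g h : nat -> C) : inH nu xi eta s f -> inH nu xi eta s g ->
  (forall n, Cmod (h n) ^ 2 <= 2 * Cmod (f n) ^ 2 + 2 * Cmod (g n) ^ 2) ->
  inH nu xi eta s h /\ hsq nu xi eta s h <= 2 * hsq nu xi eta s f + 2 * hsq nu xi eta s g.
Proof.
  intros hf hg hb. apply series_le_lin; auto. intro n.
  split; [apply hterm_nonneg|]. unfold hterm.
  pose proof (Rpower_pos (weight nu xi eta n) s). specialize (hb n). nra.
Qed.

Lemma inH_add f g : inH nu xi eta s f -> inH nu xi eta s g -> inH nu xi eta s (seq_add f g).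
Proof. intros hf hg. apply (inH_plus_le f g); auto. intro n. apply Cmod_plus_sq_le. Qed.

Lemma inH_sub f g : inH nu xi eta s f -> inH nu xi eta s g -> inH nu xi eta s (seq_sub f g).
Proof. intros hf hg. apply (inH_plus_le f g); auto. intro n. apply Cmod_minus_sq_le. Qed.

End Hspace.

Lemma hnorm2_le_scal nu xi eta s s' (u v f g : nat -> C) K :
  inH nu xi eta s' f -> inH nu xi eta s' g -> 0 <= K ->
  hsq nu xi eta s u <= K ^ 2 * hsq nu xi eta s' f ->
  hsq nu xi eta s v <= K ^ 2 * hsq nu xi eta s' g ->
  hnorm2 nu xi eta s u v <= K * hnorm2 nu xi eta s' f g.
Proof.
  intros hf hg hK hu hv. pose proof (hsq_nonneg _ _ _ _ _ hf). pose proof (hsq_nonneg _ _ _ _ _ hg).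
  apply sqrt_le_scal; [lra|exact hK|lra].
Qed.

Lemma Cmod_lin_comb_sq_le (x y : R) (f g : C) :
  Cmod (RtoC x * f + RtoC y * g)%C ^ 2 <= (x ^ 2 + y ^ 2) * (Cmod f ^ 2 + Cmod g ^ 2).
Proof.
  pose proof (Cmod_triangle (RtoC x * f) (RtoC y * g)) as h.
  rewrite !Cmod_mult, !Cmod_R in h.
  pose proof (Cmod_ge_0 (RtoC x * f + RtoC y * g)%C).
  pose proof (Rabs_pos x). pose proof (Rabs_pos y). pose proof (Cmod_ge_0 f). pose proof (Cmod_ge_0 g).
  rewrite <- (pow2_abs x), <- (pow2_abs y).
  apply Rle_trans with ((Rabs x * Cmod f + Rabs y * Cmod g) ^ 2); [apply pow_incr; lra|].
  pose proof (pow2_ge_0 (Rabs x * Cmod g - Rabs y * Cmod f)). nra.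
Qed.

(* the duality between [H^-s] and [H^s], paired against [(xi, eta)] *)
Lemma series_Cmod_dual_le nu xi eta s (g f1 f2 : nat -> C) :
  inH nu xi eta (- s) g -> inH nu xi eta s f1 -> inH nu xi eta s f2 ->
  ex_series (fun n => Cmod (g n * (RtoC (IZR xi) * f1 n + RtoC (IZR eta) * f2 n))%C) /\
  Series (fun n => Cmod (g n * (RtoC (IZR xi) * f1 n + RtoC (IZR eta) * f2 n))%C)
    <= sqrt (hsq nu xi eta (- s) g * (zeta_sq xi eta * (hsq nu xi eta s f1 + hsq nu xi eta s f2))).
Proof.
  intros hg hf1 hf2.
  assert (hq : ex_series (fun n => zeta_sq xi eta * (hterm nu xi eta s f1 n + hterm nu xi eta s f2 n))).
  { apply (ex_series_ext (fun n => (hterm nu xi eta s f1 n + hterm nu xi eta s f2 n) * zeta_sq xi eta));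
      [intro; apply Rmult_comm|].
    apply ex_series_scal_r, (ex_series_plus (V := R_NormedModule)); assumption. }
  unfold hsq at 2 3. rewrite <- Series_plus, <- Series_scal_l by assumption.
  apply series_cauchy_schwarz; try assumption.
  - apply hterm_nonneg.
  - intro n. pose proof (hterm_nonneg nu xi eta s f1 n). pose proof (hterm_nonneg nu xi eta s f2 n).
    apply Rmult_le_pos; [unfold zeta_sq; pose proof (pow2_ge_0 (IZR xi));
      pose proof (pow2_ge_0 (IZR eta)); lra|lra].
  - intro n. split; [apply Cmod_ge_0|]. unfold hterm.
    assert (hw : Rpower (weight nu xi eta n) (- s) * Rpower (weight nu xi eta n) s = 1).
    { unfold Rpower. rewrite <- exp_plus, <- exp_0. f_equal. ring. }
    pose proof (Cmod_lin_comb_sq_le (IZR xi) (IZR eta) (f1 n) (f2 n)) as h.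
    rewrite Cmod_mult, Rpow_mult_distr.
    pose proof (pow2_ge_0 (Cmod (g n))) as hg2.
    replace (Rpower (weight nu xi eta n) (- s) * Cmod (g n) ^ 2 *
             (zeta_sq xi eta * (Rpower (weight nu xi eta n) s * Cmod (f1 n) ^ 2 +
                                Rpower (weight nu xi eta n) s * Cmod (f2 n) ^ 2)))
      with (Cmod (g n) ^ 2 * (zeta_sq xi eta * (Cmod (f1 n) ^ 2 + Cmod (f2 n) ^ 2)) *
            (Rpower (weight nu xi eta n) (- s) * Rpower (weight nu xi eta n) s)) by ring.
    rewrite hw, Rmult_1_r. apply Rmult_le_compat_l; [exact hg2|exact h].
Qed.

Lemma jzeta_ge1 xi eta : 1 <= jzeta xi eta.
Proof. unfold jzeta, zeta_abs. pose proof (sqrt_pos (zeta_sq xi eta)). lra. Qed.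

Lemma jomega_sq_ge1 xi eta l : 1 <= jomega_sq xi eta l.
Proof. unfold jomega_sq. pose proof (Cmod_ge_0 l). pose proof (jzeta_ge1 xi eta). nra. Qed.

Lemma jzeta_sq_bounds xi eta : 1 <= zeta_sq xi eta ->
  1 + zeta_sq xi eta <= jzeta xi eta ^ 2 <= 2 + 2 * zeta_sq xi eta.
Proof.
  intros hz. unfold jzeta, zeta_abs.
  pose proof (sqrt_sqrt (zeta_sq xi eta) ltac:(lra)). pose proof (sqrt_pos (zeta_sq xi eta)).
  pose proof (pow2_ge_0 (sqrt (zeta_sq xi eta) - 1)). nra.
Qed.

Lemma zeta_abs_ge1 xi eta : 1 <= zeta_sq xi eta -> 1 <= zeta_abs xi eta.
Proof. intros hz. unfold zeta_abs. rewrite <- sqrt_1. apply sqrt_le_1_alt, hz. Qed.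

Lemma zeta_abs_sq xi eta : zeta_abs xi eta ^ 2 = zeta_sq xi eta.
Proof.
  unfold zeta_abs, zeta_sq. apply pow2_sqrt.
  pose proof (pow2_ge_0 (IZR xi)). pose proof (pow2_ge_0 (IZR eta)). lra.
Qed.

Definition Ms_term (xi eta : Z) (l : C) (s : R) (n : nat) : R :=
  / (kR n ^ 2 * (kR n ^ 4 + jomega_sq xi eta l ^ 2) * Rpower (kR n ^ 2 + jzeta xi eta ^ 2) s).

Lemma Ms_term_pos xi eta l s n : 0 < Ms_term xi eta l s n.
Proof.
  unfold Ms_term. pose proof (kR_ge1 n). pose proof (jomega_sq_ge1 xi eta l).
  apply Rinv_0_lt_compat, Rmult_lt_0_compat; [|apply Rpower_pos].
  apply Rmult_lt_0_compat; [nra|]. pose proof (pow_lt (kR n) 4 ltac:(lra)). nra.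
Qed.

Lemma ex_series_Ms_term xi eta l s : -5/2 < s -> ex_series (Ms_term xi eta l s).
Proof.
  intros hs.
  set (J := jzeta xi eta ^ 2).
  assert (hJ : 1 <= J) by (unfold J; pose proof (jzeta_ge1 xi eta); nra).
  set (K := Rpower 1 (- s) + Rpower (1 + J) (- s)).
  apply (ex_series_le (V := R_CompleteNormedModule) _
           (fun n => Rpower (kR n) (- (1 + (5 + 2 * s))) * K)).
  2:{ apply ex_series_scal_r, ex_series_Rpower_kR. lra. }
  intro n. pose proof (Ms_term_pos xi eta l s n).
  change (norm (Ms_term xi eta l s n)) with (Rabs (Ms_term xi eta l s n)).
  rewrite Rabs_right by lra.
  pose proof (kR_ge1 n) as hk.
  assert (hB : Rpower (kR n ^ 2 + J) (- s) <= K * Rpower (kR n ^ 2) (- s)).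
  { assert (1 <= kR n ^ 2) by nra. apply Rpower_le_between; [lra|lra|split; nra]. }
  assert (e1 : Rpower (kR n ^ 2) (- s) = Rpower (kR n) (- (2 * s))).
  { rewrite <- (Rpower_pow 2 (kR n)), Rpower_mult by lra. f_equal. simpl. ring. }
  assert (e2 : Rpower (kR n) (- (1 + (5 + 2 * s))) = / kR n ^ 6 * Rpower (kR n) (- (2 * s))).
  { rewrite <- (Rpower_pow 6 (kR n)), <- Rpower_Ropp, <- Rpower_plus by lra.
    f_equal. simpl. ring. }
  assert (h6 : / (kR n ^ 2 * (kR n ^ 4 + jomega_sq xi eta l ^ 2)) <= / kR n ^ 6).
  { apply Rinv_le_contravar; [apply pow_lt; lra|].
    pose proof (pow2_ge_0 (jomega_sq xi eta l)). pose proof (pow_lt (kR n) 2 ltac:(lra)).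
    replace (kR n ^ 6) with (kR n ^ 2 * kR n ^ 4) by ring. nra. }
  unfold Ms_term. fold J. rewrite e2, Rinv_mult, <- Rpower_Ropp, <- e1.
  pose proof (Rpower_pos (kR n ^ 2 + J) (- s)).
  assert (0 < / kR n ^ 6) by (apply Rinv_0_lt_compat, pow_lt; lra).
  apply Rle_trans with (/ kR n ^ 6 * Rpower (kR n ^ 2 + J) (- s)); [apply Rmult_le_compat_r|]; nra.
Qed.

Lemma Ms_sq xi eta l s : -5/2 < s -> Ms xi eta l s ^ 2 = Series (Ms_term xi eta l s).
Proof.
  intros hs. apply pow2_sqrt, Series_nonneg; [|apply ex_series_Ms_term, hs].
  intro n. apply Rlt_le, Ms_term_pos.
Qed.

Lemma Ms_pos xi eta l s : -5/2 < s -> 0 < Ms xi eta l s.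
Proof.
  intros hs. apply sqrt_lt_R0. change (0 < Series (Ms_term xi eta l s)).
  pose proof (ex_series_Ms_term xi eta l s hs) as he.
  rewrite Series_incr_1 by exact he.
  pose proof (Ms_term_pos xi eta l s 0).
  pose proof (Series_nonneg _ (fun n => Rlt_le _ _ (Ms_term_pos xi eta l s (S n)))
                (proj1 (ex_series_incr_1 _) he)).
  lra.
Qed.

Lemma weight_between nu xi eta n : 0 < nu -> 1 <= zeta_sq xi eta ->
  Rmin 1 nu / 2 * (kR n ^ 2 + jzeta xi eta ^ 2) <= weight nu xi eta n
  <= Rmax 1 nu * (kR n ^ 2 + jzeta xi eta ^ 2).
Proof.
  intros hnu hz. pose proof (jzeta_sq_bounds xi eta hz). unfold weight.
  pose proof (pow2_ge_0 (kR n)).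
  pose proof (Rmin_l 1 nu). pose proof (Rmin_r 1 nu).
  pose proof (Rmax_l 1 nu). pose proof (Rmax_r 1 nu).
  assert (0 < Rmin 1 nu) by (apply Rmin_glb_lt; lra).
  split; nra.
Qed.

Section Resolvent.
Variables (a nu : R).
Hypotheses (ha : 0 < a) (hnu : 0 < nu).
Variables (xi eta : Z) (l : C).
Hypothesis hz : 1 <= zeta_sq xi eta.

(** * The symbol of [omega^2 - nu d_zz] *)

Definition dissip n := nu * zeta_sq xi eta + nu * (kR n * PI / a) ^ 2.

(* [Cmod (symb n)] is comparable to [symb_scale n] *)
Definition symb_scale n := dissip n + Rabs (fst l) + Rabs (snd l).

Lemma symb_eq n : symb a nu xi eta l n = (l + RtoC (dissip n))%C.
Proof. unfold symb, omega_sq, dissip. rewrite RtoC_plus. ring. Qed.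

Lemma nu_le_dissip n : nu * zeta_sq xi eta <= dissip n /\ nu <= dissip n.
Proof. unfold dissip. pose proof (pow2_ge_0 (kR n * PI / a)). nra. Qed.

Lemma Cmod_symb_le_symb_scale n : Cmod (symb a nu xi eta l n) <= symb_scale n.
Proof.
  rewrite symb_eq. unfold symb_scale. pose proof (Cmod_le_abs_re_im l).
  pose proof (Cmod_triangle l (RtoC (dissip n))) as ht. rewrite Cmod_R in ht.
  pose proof (nu_le_dissip n). rewrite Rabs_right in ht by lra. lra.
Qed.

Lemma jomega_sq_le_symb_scale n : jomega_sq xi eta l <= (1 + 4 / nu) * symb_scale n.
Proof.
  unfold jomega_sq, symb_scale.
  pose proof (jzeta_sq_bounds xi eta hz). pose proof (nu_le_dissip n).
  pose proof (Cmod_le_abs_re_im l).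
  assert (jzeta xi eta ^ 2 <= 4 / nu * dissip n).
  { apply Rle_trans with (4 / nu * (nu * zeta_sq xi eta)); [|apply Rmult_le_compat_l].
    - replace (4 / nu * (nu * zeta_sq xi eta)) with (4 * zeta_sq xi eta) by (field; lra). lra.
    - apply Rlt_le, Rdiv_lt_0_compat; lra.
    - lra. }
  pose proof (Rabs_pos (fst l)). pose proof (Rabs_pos (snd l)).
  assert (0 <= 4 / nu) by (apply Rlt_le, Rdiv_lt_0_compat; lra). nra.
Qed.

Lemma kR_sq_le_symb_scale n : kR n ^ 2 <= a ^ 2 / (nu * PI ^ 2) * symb_scale n.
Proof.
  pose proof PI_RGT_0. pose proof (nu_le_dissip n).
  assert (hK : 0 < a ^ 2 / (nu * PI ^ 2))
    by (apply Rdiv_lt_0_compat; [apply pow_lt; lra|pose proof (pow_lt PI 2 PI_RGT_0); nra]).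
  replace (kR n ^ 2) with (a ^ 2 / (nu * PI ^ 2) * (nu * (kR n * PI / a) ^ 2))
    by (field; repeat split; lra).
  apply Rmult_le_compat_l; [lra|]. unfold symb_scale, dissip in *.
  pose proof (Rabs_pos (fst l)). pose proof (Rabs_pos (snd l)). nra.
Qed.

Lemma weight_le_symb_scale n : weight nu xi eta n <= (1 / nu + a ^ 2 / PI ^ 2 + 1) * symb_scale n.
Proof.
  pose proof PI_RGT_0. pose proof (nu_le_dissip n). pose proof (kR_sq_le_symb_scale n).
  assert (hD : dissip n <= symb_scale n)
    by (unfold symb_scale; pose proof (Rabs_pos (fst l)); pose proof (Rabs_pos (snd l)); lra).
  unfold weight.
  assert (1 <= 1 / nu * symb_scale n).
  { apply Rle_trans with (1 / nu * nu); [right; field; lra|].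
    apply Rmult_le_compat_l; [apply Rlt_le, Rdiv_lt_0_compat|]; lra. }
  assert (nu * kR n ^ 2 <= a ^ 2 / PI ^ 2 * symb_scale n).
  { apply Rle_trans with (nu * (a ^ 2 / (nu * PI ^ 2) * symb_scale n)).
    - apply Rmult_le_compat_l; lra.
    - right. field. lra. }
  lra.
Qed.

Definition K_symb := 1 + (PI / a) ^ 2 + Rabs (fst l) + Rabs (snd l).

Lemma K_symb_ge1 : 1 <= K_symb.
Proof.
  unfold K_symb. pose proof (pow2_ge_0 (PI / a)).
  pose proof (Rabs_pos (fst l)). pose proof (Rabs_pos (snd l)). lra.
Qed.

Lemma Cmod_symb_le_weight n : Cmod (symb a nu xi eta l n) <= K_symb * weight nu xi eta n.
Proof.
  eapply Rle_trans; [apply Cmod_symb_le_symb_scale|]. unfold symb_scale, dissip, K_symb, weight.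
  pose proof (pow2_ge_0 (PI / a)). pose proof (Rabs_pos (fst l)). pose proof (Rabs_pos (snd l)).
  pose proof (pow2_ge_0 (kR n)).
  replace (nu * (kR n * PI / a) ^ 2) with ((PI / a) ^ 2 * (nu * kR n ^ 2)) by (field; lra).
  assert (0 <= nu * kR n ^ 2) by nra. assert (1 <= nu * zeta_sq xi eta + 1) by nra.
  nra.
Qed.

Definition one_seq (n : nat) : C := RtoC (one_coef a n).

Lemma one_seq_in_H s : s < 1/2 -> inH nu xi eta s one_seq.
Proof.
  intros hs.
  set (Kz := 1 + nu + nu * zeta_sq xi eta).
  set (K := 8 * a / PI ^ 2 * (Rpower nu s + Rpower Kz s)).
  apply (ex_series_le (V := R_CompleteNormedModule) _
           (fun n => Rpower (kR n) (- (1 + (1 - 2 * s))) * K)).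
  2:{ apply ex_series_scal_r, ex_series_Rpower_kR. lra. }
  intro n. change (norm (hterm nu xi eta s one_seq n)) with (Rabs (hterm nu xi eta s one_seq n)).
  rewrite Rabs_right by (apply Rle_ge, hterm_nonneg).
  pose proof (kR_ge1 n) as hk. pose proof PI_RGT_0.
  assert (hk2 : 1 <= kR n ^ 2) by nra.
  assert (hw : Rpower (weight nu xi eta n) s <= (Rpower nu s + Rpower Kz s) * Rpower (kR n ^ 2) s).
  { apply Rpower_le_between; [lra|lra|]. unfold weight, Kz.
    assert (0 <= nu * zeta_sq xi eta) by nra.
    assert (nu * zeta_sq xi eta <= nu * zeta_sq xi eta * kR n ^ 2) by nra. split; nra. }
  assert (e1 : Rpower (kR n) (- (1 + (1 - 2 * s))) = / kR n ^ 2 * Rpower (kR n ^ 2) s).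
  { rewrite <- (Rpower_pow 2 (kR n)), Rpower_mult, <- Rpower_Ropp, <- Rpower_plus by lra.
    f_equal. simpl. ring. }
  rewrite e1. unfold hterm, one_seq, K. rewrite Cmod_R, pow2_abs.
  pose proof (one_coef_sq_le a n ha).
  pose proof (Rpower_pos (weight nu xi eta n) s). pose proof (Rpower_pos (kR n ^ 2) s).
  pose proof (Rpower_pos nu s). pose proof (Rpower_pos Kz s).
  replace (/ kR n ^ 2 * Rpower (kR n ^ 2) s * (8 * a / PI ^ 2 * (Rpower nu s + Rpower Kz s)))
    with ((Rpower nu s + Rpower Kz s) * Rpower (kR n ^ 2) s * (8 * a / PI ^ 2 / kR n ^ 2))
    by (field; lra).
  apply Rmult_le_compat; [lra|apply pow2_ge_0|exact hw|assumption].
Qed.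

Lemma L0_3_in_H s t : inH nu xi eta (s + 2) t ->
  inH nu xi eta s (L0_3 a nu xi eta l t) /\
  hsq nu xi eta s (L0_3 a nu xi eta l t) <= K_symb ^ 2 * hsq nu xi eta (s + 2) t.
Proof.
  intros ht. apply series_le_scal; [|exact ht]. intro n.
  split; [apply hterm_nonneg|]. unfold hterm, L0_3.
  pose proof (weight_pos nu xi eta n ltac:(lra)) as hw.
  pose proof (Rpower_pos (weight nu xi eta n) s).
  pose proof (Cmod_symb_le_weight n). pose proof (Cmod_ge_0 (symb a nu xi eta l n)).
  pose proof K_symb_ge1.
  rewrite Rpower_plus_2, Cmod_mult, Rpow_mult_distr by exact hw.
  assert (hsq : Cmod (symb a nu xi eta l n) ^ 2 <= K_symb ^ 2 * weight nu xi eta n ^ 2)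
    by (rewrite <- Rpow_mult_distr; apply pow_incr; lra).
  replace (K_symb ^ 2 * (Rpower (weight nu xi eta n) s * weight nu xi eta n ^ 2 * Cmod (t n) ^ 2))
    with (Rpower (weight nu xi eta n) s * (K_symb ^ 2 * weight nu xi eta n ^ 2 * Cmod (t n) ^ 2))
    by ring.
  apply Rmult_le_compat_l; [lra|]. apply Rmult_le_compat_r; [apply pow2_ge_0|exact hsq].
Qed.

(* [L0_1] and [L0_2] are [mom_comp (IZR xi)] and [mom_comp (IZR eta)] up to conversion *)
Definition mom_comp (r : R) (u : nat -> C) (p0 : C) (n : nat) : C :=
  (symb a nu xi eta l n * u n + Ci * RtoC r * (p0 * RtoC (one_coef a n)))%C.

Lemma mom_comp_in_H s r u p0 : s < 1/2 -> inH nu xi eta (s + 2) u ->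
  inH nu xi eta s (mom_comp r u p0) /\
  hsq nu xi eta s (mom_comp r u p0)
    <= 2 * K_symb ^ 2 * hsq nu xi eta (s + 2) u + 2 * (r ^ 2 * Cmod p0 ^ 2) * hsq nu xi eta s one_seq.
Proof.
  intros hs hu.
  destruct (L0_3_in_H s u hu) as [h1 e1].
  destruct (inH_scal nu xi eta s (Ci * RtoC r * p0)%C _ (one_seq_in_H s hs)) as [h2 e2].
  destruct (inH_plus_le nu xi eta s _ _ (mom_comp r u p0) h1 h2) as [h e].
  { intro n. unfold mom_comp, L0_3, one_seq.
    replace (Ci * RtoC r * (p0 * RtoC (one_coef a n)))%C
      with (Ci * RtoC r * p0 * RtoC (one_coef a n))%C by ring.
    apply Cmod_plus_sq_le. }
  split; [exact h|]. rewrite e2, !Cmod_mult, Cmod_Ci, Cmod_R, Rmult_1_l, Rpow_mult_distr, pow2_abs in e.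
  lra.
Qed.

Lemma L0_norm_le s u v p0 t : s < 1/2 ->
  inH nu xi eta (s + 2) u -> inH nu xi eta (s + 2) v -> inH nu xi eta (s + 2) t ->
  hnorm3 nu xi eta s (L0_1 a nu xi eta l u p0) (L0_2 a nu xi eta l v p0) (L0_3 a nu xi eta l t)
    <= sqrt (2 * K_symb ^ 2 + 2 * zeta_sq xi eta * hsq nu xi eta s one_seq)
       * dom_norm nu xi eta s u v p0 t.
Proof.
  intros hs hu hv ht.
  destruct (mom_comp_in_H s (IZR xi) u p0 hs hu) as [_ h1].
  destruct (mom_comp_in_H s (IZR eta) v p0 hs hv) as [_ h2].
  destruct (L0_3_in_H s t ht) as [_ h3].
  pose proof (hsq_nonneg _ _ _ _ _ hu). pose proof (hsq_nonneg _ _ _ _ _ hv).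
  pose proof (hsq_nonneg _ _ _ _ _ ht). pose proof (hsq_nonneg _ _ _ _ _ (one_seq_in_H s hs)).
  pose proof (pow2_ge_0 K_symb). pose proof (pow2_ge_0 (Cmod p0)).
  pose proof (pow2_ge_0 (IZR xi)). pose proof (pow2_ge_0 (IZR eta)).
  unfold hnorm3, dom_norm. rewrite <- sqrt_mult by (unfold zeta_sq in *; nra).
  apply sqrt_le_1_alt. change (L0_1 a nu xi eta l u p0) with (mom_comp (IZR xi) u p0).
  change (L0_2 a nu xi eta l v p0) with (mom_comp (IZR eta) v p0).
  unfold zeta_sq in *.
  set (X := IZR xi ^ 2) in *. set (E := IZR eta ^ 2) in *.
  set (S0 := hsq nu xi eta s one_seq) in *. set (Q := Cmod p0 ^ 2) in *.
  set (A := hsq nu xi eta (s + 2) u) in *. set (B := hsq nu xi eta (s + 2) v) in *.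
  set (T := hsq nu xi eta (s + 2) t) in *.
  assert (0 <= (X + E) * S0) by nra.
  assert (0 <= (X + E) * S0 * A) by nra. assert (0 <= (X + E) * S0 * B) by nra.
  assert (0 <= (X + E) * S0 * T) by nra.
  assert (0 <= K_symb ^ 2 * Q) by nra. assert (0 <= K_symb ^ 2 * T) by nra.
  nra.
Qed.

Lemma mom_comp_sub r u u' p0 p0' :
  seq_sub (mom_comp r u p0) (mom_comp r u' p0') = mom_comp r (seq_sub u u') (p0 - p0')%C.
Proof. apply functional_extensionality. intro n. unfold seq_sub, mom_comp. ring. Qed.

Lemma L0_3_sub t t' :
  seq_sub (L0_3 a nu xi eta l t) (L0_3 a nu xi eta l t') = L0_3 a nu xi eta l (seq_sub t t').
Proof. apply functional_extensionality. intro n. unfold seq_sub, L0_3. ring. Qed.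

Lemma L0_maps_into s : s < 1/2 ->
  forall u v p0 t, in_dom a nu xi eta s u v t ->
    inH nu xi eta s (L0_1 a nu xi eta l u p0) /\ inH nu xi eta s (L0_2 a nu xi eta l v p0) /\
    inH nu xi eta s (L0_3 a nu xi eta l t).
Proof.
  intros hs u v p0 t [hu [hv [_ ht]]].
  split; [exact (proj1 (mom_comp_in_H s _ u p0 hs hu))|].
  split; [exact (proj1 (mom_comp_in_H s _ v p0 hs hv))|exact (proj1 (L0_3_in_H s t ht))].
Qed.

Lemma L0_continuous s : s < 1/2 ->
  forall u v p0 t, in_dom a nu xi eta s u v t ->
  forall eps, 0 < eps -> exists del, 0 < del /\
  forall u' v' p0' t', in_dom a nu xi eta s u' v' t' ->
    dom_norm nu xi eta s (seq_sub u u') (seq_sub v v') (Cminus p0 p0') (seq_sub t t') < del ->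
    hnorm3 nu xi eta s
      (seq_sub (L0_1 a nu xi eta l u p0) (L0_1 a nu xi eta l u' p0'))
      (seq_sub (L0_2 a nu xi eta l v p0) (L0_2 a nu xi eta l v' p0'))
      (seq_sub (L0_3 a nu xi eta l t) (L0_3 a nu xi eta l t')) < eps.
Proof.
  intros hs u v p0 t [hu [hv [_ ht]]] eps heps.
  set (K := sqrt (2 * K_symb ^ 2 + 2 * zeta_sq xi eta * hsq nu xi eta s one_seq)).
  assert (hK : 0 <= K) by apply sqrt_pos.
  exists (eps / (K + 1)). split; [apply Rdiv_lt_0_compat; lra|].
  intros u' v' p0' t' [hu' [hv' [_ ht']]] hdn.
  change (L0_1 a nu xi eta l) with (mom_comp (IZR xi)).
  change (L0_2 a nu xi eta l) with (mom_comp (IZR eta)).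
  rewrite !mom_comp_sub, L0_3_sub.
  pose proof (L0_norm_le s _ _ (p0 - p0')%C _ hs (inH_sub _ _ _ _ u u' hu hu')
                (inH_sub _ _ _ _ v v' hv hv') (inH_sub _ _ _ _ t t' ht ht')) as hb.
  fold K in hb.
  set (dn := dom_norm nu xi eta s (seq_sub u u') (seq_sub v v') (p0 - p0')%C (seq_sub t t')) in *.
  assert (0 <= dn) by apply sqrt_pos.
  assert (K * dn <= K * (eps / (K + 1))) by (apply Rmult_le_compat_l; lra).
  assert (K * (eps / (K + 1)) < eps).
  { apply (Rmult_lt_reg_r (K + 1)); [lra|].
    replace (K * (eps / (K + 1)) * (K + 1)) with (K * eps) by (field; lra). nra. }
  apply Rle_lt_trans with (K * dn); [exact hb|lra].
Qed.

Variables (d1 d2 : R).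
Hypotheses (hd1 : 0 < d1) (hd2 : 0 < d2) (hd2nu : d2 < nu / 2).

(* the shift by [d2 < nu/2] keeps [S] away from [-nu, 0], and the sector condition
   [|Im lambda| >= mu1 / d1] controls [Re lambda] by [Im lambda] *)
Lemma in_S_Cmod_plus_lower (lam : C) (A : R) : nu <= A -> in_S d1 d2 lam ->
  A + Rabs (fst lam) + Rabs (snd lam) <= 4 * (1 + d1) * Cmod (lam + RtoC A)%C.
Proof.
  intros hA [mu1 [mu2 [-> hmu]]].
  pose proof (Rabs_fst_le_Cmod (((- d2 - mu1)%R, mu2) + RtoC A)%C) as h1.
  pose proof (Rabs_snd_le_Cmod (((- d2 - mu1)%R, mu2) + RtoC A)%C) as h2.
  set (m := Cmod _) in *. simpl in h1, h2 |- *. rewrite Rplus_0_r in h2.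
  destruct (Rle_dec mu1 0) as [hm|hm].
  - destruct (Rle_dec 0 (- d2 - mu1)) as [hp|hp].
    + rewrite Rabs_right in h1 by lra. rewrite Rabs_right by lra. nra.
    + rewrite Rabs_right in h1 by lra. rewrite Rabs_left by lra. nra.
  - assert (hmu1 : mu1 <= d1 * m).
    { apply Rge_le, (Rmult_le_compat_l d1) in hmu; [|lra].
      replace (d1 * (mu1 / d1)) with mu1 in hmu by (field; lra). nra. }
    rewrite Rabs_left by lra.
    pose proof (Rle_abs (- d2 - mu1 + A)). nra.
Qed.

Lemma symb_scale_le_Cmod_symb n : in_S d1 d2 l ->
  symb_scale n <= 4 * (1 + d1) * Cmod (symb a nu xi eta l n).
Proof.
  intros hS. rewrite symb_eq. apply in_S_Cmod_plus_lower; [apply nu_le_dissip|exact hS].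
Qed.

Lemma Cmod_symb_pos n : in_S d1 d2 l -> 0 < Cmod (symb a nu xi eta l n).
Proof.
  intros hS. pose proof (symb_scale_le_Cmod_symb n hS) as h. pose proof (nu_le_dissip n).
  unfold symb_scale in h. pose proof (Rabs_pos (fst l)). pose proof (Rabs_pos (snd l)). nra.
Qed.

Lemma symb_neq_0 n : in_S d1 d2 l -> symb a nu xi eta l n <> 0%C.
Proof. intros hS h. pose proof (Cmod_symb_pos n hS) as hM. rewrite h, Cmod_0 in hM. lra. Qed.

Definition K_omega := (1 + 4 / nu) * (4 * (1 + d1)).

Definition K_weight := (1 / nu + a ^ 2 / PI ^ 2 + 1) * (4 * (1 + d1)).

Definition K_freq := (1 + 4 / nu + a ^ 2 / (nu * PI ^ 2)) * (4 * (1 + d1)).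

Lemma K_omega_pos : 0 < K_omega.
Proof. unfold K_omega. assert (0 < 4 / nu) by (apply Rdiv_lt_0_compat; lra). nra. Qed.

Lemma K_weight_pos : 0 < K_weight.
Proof.
  unfold K_weight. pose proof PI_RGT_0. assert (0 < 1 / nu) by (apply Rdiv_lt_0_compat; lra).
  assert (0 <= a ^ 2 / PI ^ 2)
    by (apply Rmult_le_pos; [apply pow2_ge_0|apply Rlt_le, Rinv_0_lt_compat, pow_lt; lra]).
  nra.
Qed.

Lemma K_freq_pos : 0 < K_freq.
Proof.
  unfold K_freq. pose proof PI_RGT_0. assert (0 < 4 / nu) by (apply Rdiv_lt_0_compat; lra).
  assert (0 <= a ^ 2 / (nu * PI ^ 2))
    by (apply Rlt_le, Rdiv_lt_0_compat; [apply pow_lt; lra|pose proof (pow_lt PI 2 PI_RGT_0); nra]).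
  nra.
Qed.

Lemma jomega_sq_le_Cmod_symb n : in_S d1 d2 l ->
  jomega_sq xi eta l <= K_omega * Cmod (symb a nu xi eta l n).
Proof.
  intros hS. pose proof (jomega_sq_le_symb_scale n). pose proof (symb_scale_le_Cmod_symb n hS).
  assert (0 < 1 + 4 / nu) by (assert (0 < 4 / nu) by (apply Rdiv_lt_0_compat; lra); lra).
  unfold K_omega. rewrite Rmult_assoc. eapply Rle_trans; [eassumption|].
  apply Rmult_le_compat_l; lra.
Qed.

Lemma weight_le_Cmod_symb n : in_S d1 d2 l ->
  weight nu xi eta n <= K_weight * Cmod (symb a nu xi eta l n).
Proof.
  intros hS. pose proof (weight_le_symb_scale n). pose proof (symb_scale_le_Cmod_symb n hS).
  unfold K_weight. rewrite Rmult_assoc. eapply Rle_trans; [eassumption|].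
  apply Rmult_le_compat_l; [|lra].
  pose proof PI_RGT_0. assert (0 < 1 / nu) by (apply Rdiv_lt_0_compat; lra).
  assert (0 <= a ^ 2 / PI ^ 2)
    by (apply Rmult_le_pos; [apply pow2_ge_0|apply Rlt_le, Rinv_0_lt_compat, pow_lt; lra]).
  lra.
Qed.

Lemma freq_le_Cmod_symb n : in_S d1 d2 l ->
  kR n ^ 2 + jomega_sq xi eta l <= K_freq * Cmod (symb a nu xi eta l n).
Proof.
  intros hS. pose proof (jomega_sq_le_symb_scale n). pose proof (kR_sq_le_symb_scale n).
  pose proof (symb_scale_le_Cmod_symb n hS). pose proof (nu_le_dissip n).
  pose proof PI_RGT_0. assert (0 < 4 / nu) by (apply Rdiv_lt_0_compat; lra).
  assert (0 <= a ^ 2 / (nu * PI ^ 2))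
    by (apply Rlt_le, Rdiv_lt_0_compat; [apply pow_lt; lra|pose proof (pow_lt PI 2 PI_RGT_0); nra]).
  unfold K_freq. rewrite Rmult_assoc.
  apply Rle_trans with ((1 + 4 / nu + a ^ 2 / (nu * PI ^ 2)) * symb_scale n); [lra|].
  apply Rmult_le_compat_l; lra.
Qed.

(** * The pressure profile *)

Definition symb_div (f : nat -> C) (n : nat) : C := (f n / symb a nu xi eta l n)%C.

(* coefficients of [(omega^2 - nu d_zz)^-1 1]; a pressure [p0] adds
   [- i p0 (xi, eta)] times this profile to the velocity *)
Definition press_profile := symb_div one_seq.

Definition K_profile s :=
  8 * a / PI ^ 2 * (Rpower (Rmin 1 nu / 2) (- s) + Rpower (Rmax 1 nu) (- s)) * K_freq ^ 2.

Lemma inv_Cmod_symb_sq_le n : in_S d1 d2 l ->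
  / Cmod (symb a nu xi eta l n) ^ 2 <= K_freq ^ 2 * / (kR n ^ 4 + jomega_sq xi eta l ^ 2).
Proof.
  intros hS. pose proof (Cmod_symb_pos n hS) as hM. pose proof (freq_le_Cmod_symb n hS) as hK.
  pose proof (kR_ge1 n). pose proof (jomega_sq_ge1 xi eta l).
  set (M := Cmod (symb a nu xi eta l n)) in *.
  set (W := kR n ^ 4 + jomega_sq xi eta l ^ 2).
  assert (hW : 0 < W) by (unfold W; pose proof (pow_lt (kR n) 4 ltac:(lra)); nra).
  assert (hWM : W <= (K_freq * M) ^ 2).
  { apply Rle_trans with ((kR n ^ 2 + jomega_sq xi eta l) ^ 2); [unfold W; nra|].
    apply pow_incr. nra. }
  apply (Rmult_le_reg_r (M ^ 2 * W)); [nra|].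
  replace (/ M ^ 2 * (M ^ 2 * W)) with W by (field; lra).
  replace (K_freq ^ 2 * / W * (M ^ 2 * W)) with ((K_freq * M) ^ 2) by (field; lra).
  exact hWM.
Qed.

Lemma hterm_press_profile_le s n : in_S d1 d2 l ->
  hterm nu xi eta (- s) press_profile n <= K_profile s * Ms_term xi eta l s n.
Proof.
  intros hS.
  pose proof (Cmod_symb_pos n hS) as hM. pose proof (kR_ge1 n) as hk.
  pose proof (jomega_sq_ge1 xi eta l) as hw. pose proof (jzeta_ge1 xi eta) as hj.
  set (M := Cmod (symb a nu xi eta l n)) in *.
  set (B := kR n ^ 2 + jzeta xi eta ^ 2).
  assert (hB : 0 < B) by (unfold B; nra).
  assert (hmin : 0 < Rmin 1 nu / 2) by (assert (0 < Rmin 1 nu) by (apply Rmin_glb_lt; lra); lra).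
  assert (hweight : Rpower (weight nu xi eta n) (- s)
    <= (Rpower (Rmin 1 nu / 2) (- s) + Rpower (Rmax 1 nu) (- s)) * Rpower B (- s))
    by (apply Rpower_le_between; [lra|lra|apply weight_between; lra]).
  assert (hcoef : one_coef a n ^ 2 <= 8 * a / PI ^ 2 * / kR n ^ 2)
    by (pose proof (one_coef_sq_le a n ha) as hc; unfold Rdiv at 2 in hc; lra).
  pose proof (inv_Cmod_symb_sq_le n hS) as hsymb. fold M in hsymb.
  assert (e : hterm nu xi eta (- s) press_profile n
              = Rpower (weight nu xi eta n) (- s) * (one_coef a n ^ 2 * / M ^ 2)).
  { unfold hterm, press_profile, symb_div, one_seq. rewrite Cmod_div, Cmod_R
      by (apply symb_neq_0; auto). fold M. rewrite <- (pow2_abs (one_coef a n)). field. lra. }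
  assert (eM : Ms_term xi eta l s n
               = / kR n ^ 2 * / (kR n ^ 4 + jomega_sq xi eta l ^ 2) * Rpower B (- s)).
  { unfold Ms_term. fold B. rewrite !Rinv_mult, Rpower_Ropp. reflexivity. }
  rewrite e, eM.
  pose proof (Rpower_pos (weight nu xi eta n) (- s)). pose proof (Rpower_pos B (- s)).
  pose proof (pow2_ge_0 (one_coef a n)).
  assert (0 < / M ^ 2) by (apply Rinv_0_lt_compat, pow_lt; lra).
  apply Rle_trans with (((Rpower (Rmin 1 nu / 2) (- s) + Rpower (Rmax 1 nu) (- s)) * Rpower B (- s))
    * (8 * a / PI ^ 2 * / kR n ^ 2 * (K_freq ^ 2 * / (kR n ^ 4 + jomega_sq xi eta l ^ 2)))).
  - apply Rmult_le_compat; [lra|nra|lra|]. apply Rmult_le_compat; nra.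
  - right. unfold K_profile. ring.
Qed.

Lemma K_profile_pos s : 0 < K_profile s.
Proof.
  unfold K_profile. pose proof PI_RGT_0. pose proof K_freq_pos.
  pose proof (Rpower_pos (Rmin 1 nu / 2) (- s)). pose proof (Rpower_pos (Rmax 1 nu) (- s)).
  assert (0 < 8 * a / PI ^ 2) by (apply Rdiv_lt_0_compat; [lra|apply pow_lt; lra]).
  apply Rmult_lt_0_compat; [nra|apply pow_lt; lra].
Qed.

Lemma press_profile_in_H s : in_S d1 d2 l -> -5/2 < s ->
  inH nu xi eta (- s) press_profile /\
  hsq nu xi eta (- s) press_profile <= K_profile s * Ms xi eta l s ^ 2.
Proof.
  intros hS hs. rewrite Ms_sq by exact hs.
  apply series_le_scal; [|apply ex_series_Ms_term, hs].
  intro n. split; [apply hterm_nonneg|apply hterm_press_profile_le, hS].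
Qed.

Lemma ex_series_Cmod_one_profile : in_S d1 d2 l ->
  ex_series (fun n => Cmod (one_seq n * press_profile n)%C).
Proof.
  intros hS.
  apply (ex_series_le (V := R_CompleteNormedModule) _
           (fun n => / kR n ^ 2 * (8 * a / PI ^ 2 * (4 * (1 + d1) / nu)))).
  2:{ apply ex_series_scal_r, ex_series_inv_kR_sq. }
  intro n. change (norm (Cmod (one_seq n * press_profile n)%C))
    with (Rabs (Cmod (one_seq n * press_profile n)%C)).
  rewrite Rabs_right by (apply Rle_ge, Cmod_ge_0).
  pose proof (Cmod_symb_pos n hS). pose proof (symb_scale_le_Cmod_symb n hS).
  pose proof (nu_le_dissip n). pose proof (kR_ge1 n). pose proof PI_RGT_0.
  pose proof (one_coef_sq_le a n ha) as hc.
  unfold press_profile, symb_div, one_seq.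
  rewrite Cmod_mult, Cmod_div, Cmod_R by (apply symb_neq_0; auto).
  set (M := Cmod (symb a nu xi eta l n)) in *.
  replace (Rabs (one_coef a n) * (Rabs (one_coef a n) / M)) with (one_coef a n ^ 2 * / M)
    by (rewrite <- (pow2_abs (one_coef a n)); field; lra).
  assert (hM : / M <= 4 * (1 + d1) / nu).
  { apply (Rmult_le_reg_r (M * nu)); [nra|].
    replace (/ M * (M * nu)) with nu by (field; lra).
    replace (4 * (1 + d1) / nu * (M * nu)) with (4 * (1 + d1) * M) by (field; lra).
    unfold symb_scale in *. pose proof (Rabs_pos (fst l)). pose proof (Rabs_pos (snd l)). lra. }
  replace (/ kR n ^ 2 * (8 * a / PI ^ 2 * (4 * (1 + d1) / nu)))
    with (8 * a / PI ^ 2 / kR n ^ 2 * (4 * (1 + d1) / nu)) by (field; lra).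
  apply Rmult_le_compat; [apply pow2_ge_0|apply Rlt_le, Rinv_0_lt_compat; lra|exact hc|exact hM].
Qed.

Lemma Re_mul_one_profile (al be : R) n : in_S d1 d2 l ->
  fst ((al, be) * (one_seq n * press_profile n))%C
  = one_coef a n ^ 2 * (al * fst (symb a nu xi eta l n) + be * snd l)
    / Cmod (symb a nu xi eta l n) ^ 2.
Proof.
  intros hS. pose proof (Cmod_symb_pos n hS) as hM.
  assert (hM2 : 0 < Cmod (symb a nu xi eta l n) ^ 2) by (apply pow_lt, hM).
  assert (hy : snd (symb a nu xi eta l n) = snd l) by (rewrite symb_eq; simpl; ring).
  rewrite <- hy, Cmod2_alt in *. unfold press_profile, symb_div, one_seq.
  destruct (symb a nu xi eta l n) as [x y]. unfold Re, Im in *. simpl in *.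
  unfold Cdiv, Cmult, Cinv. simpl. field. lra.
Qed.

Lemma profile_mean_head_le (al be : R) Sv : in_S d1 d2 l ->
  is_series (fun n => one_seq n * press_profile n)%C Sv ->
  (forall n, 0 <= al * fst (symb a nu xi eta l n) + be * snd l) ->
  8 * a / PI ^ 2 * (al * fst (symb a nu xi eta l 0) + be * snd l)
    / Cmod (symb a nu xi eta l 0) ^ 2 <= sqrt (al ^ 2 + be ^ 2) * Cmod Sv.
Proof.
  intros hS hSv hpos.
  replace (sqrt (al ^ 2 + be ^ 2)) with (Cmod (al, be)) by (unfold Cmod; simpl; f_equal; ring).
  rewrite <- (one_coef_sq_0 a ha), <- Re_mul_one_profile by exact hS.
  apply (Re_head_le_of_is_series (al, be) (fun n => one_seq n * press_profile n)%C); [exact hSv|].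
  intro n.
  rewrite Re_mul_one_profile by exact hS.
  pose proof (Cmod_symb_pos n hS). specialize (hpos n).
  apply Rmult_le_pos; [apply Rmult_le_pos; [apply pow2_ge_0|exact hpos]|].
  apply Rlt_le, Rinv_0_lt_compat, pow_lt; lra.
Qed.

Lemma fst_symb_ge_fst_symb_0 n : fst (symb a nu xi eta l 0) <= fst (symb a nu xi eta l n).
Proof.
  rewrite !symb_eq. simpl. unfold dissip.
  assert (kR 0 * PI / a <= kR n * PI / a).
  { unfold Rdiv. pose proof PI_RGT_0. pose proof (Rinv_0_lt_compat a ha).
    apply Rmult_le_compat_r; [lra|]. apply Rmult_le_compat_r; [lra|].
    unfold kR. apply le_INR. lia. }
  assert (0 <= kR 0 * PI / a) by (pose proof (kR_ge1 0); pose proof PI_RGT_0; unfold Rdiv;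
    pose proof (Rinv_0_lt_compat a ha); apply Rmult_le_pos; [nra|lra]).
  assert ((kR 0 * PI / a) ^ 2 <= (kR n * PI / a) ^ 2) by (apply pow_incr; lra).
  nra.
Qed.

Definition K_mean := 1 + nu + nu * (PI / a) ^ 2.

Lemma Cmod_symb_0_le : Cmod (symb a nu xi eta l 0) <= K_mean * jomega_sq xi eta l.
Proof.
  rewrite symb_eq. eapply Rle_trans; [apply Cmod_triangle|]. rewrite Cmod_R.
  pose proof (nu_le_dissip 0). rewrite Rabs_right by lra.
  unfold dissip, K_mean, jomega_sq. replace (kR 0) with 1 by (unfold kR; simpl; ring).
  pose proof (jzeta_sq_bounds xi eta hz). pose proof (jzeta_ge1 xi eta).
  pose proof (Cmod_ge_0 l). pose proof (pow2_ge_0 (PI / a)).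
  replace (1 * PI / a) with (PI / a) by (field; lra).
  assert (1 <= Cmod l + jzeta xi eta ^ 2) by nra.
  assert (0 <= nu * (PI / a) ^ 2) by nra. nra.
Qed.

Lemma Cmod_symb_0_le_Im : in_S d1 d2 l -> fst (symb a nu xi eta l 0) < 0 ->
  Cmod (symb a nu xi eta l 0) <= (1 + d1) * Rabs (snd l).
Proof.
  intros hS hneg. pose proof (nu_le_dissip 0).
  rewrite symb_eq in *. pose proof (Cmod_le_abs_re_im (l + RtoC (dissip 0))%C) as hM.
  destruct hS as [mu1 [mu2 [-> hmu]]]. simpl in *. rewrite Rplus_0_r in hM.
  apply Rge_le, (Rmult_le_compat_l d1) in hmu; [|lra].
  replace (d1 * (mu1 / d1)) with mu1 in hmu by (field; lra).
  rewrite Rabs_left in hM by lra. lra.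
Qed.

Lemma profile_mean_lower_dissipative Sv : in_S d1 d2 l ->
  is_series (fun n => one_seq n * press_profile n)%C Sv -> 0 <= fst (symb a nu xi eta l 0) ->
  8 * a / PI ^ 2 <= 2 * K_mean * (Cmod Sv * jomega_sq xi eta l).
Proof.
  intros hS hSv hpos.
  destruct (exists_sign (snd l)) as [b [hb hb2]].
  pose proof (profile_mean_head_le 1 b Sv hS hSv) as h.
  replace (1 * fst (symb a nu xi eta l 0) + b * snd l)
    with (fst (symb a nu xi eta l 0) + Rabs (snd l)) in h by (rewrite <- hb; ring).
  replace (1 ^ 2 + b ^ 2) with 2 in h by nra.
  assert (sqrt 2 <= 2) by (rewrite <- (sqrt_square 2) at 2 by lra; apply sqrt_le_1_alt; lra).
  specialize (h ltac:(intro n; pose proof (fst_symb_ge_fst_symb_0 n);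
                      pose proof (Rabs_pos (snd l)); lra)).
  pose proof (Cmod_symb_pos 0 hS) as hM. pose proof Cmod_symb_0_le as hMw.
  pose proof (Cmod_le_abs_re_im (symb a nu xi eta l 0)) as hre.
  replace (snd (symb a nu xi eta l 0)) with (snd l) in hre by (rewrite symb_eq; simpl; ring).
  rewrite Rabs_right in hre by lra.
  set (M := Cmod (symb a nu xi eta l 0)) in *. set (X := fst (symb a nu xi eta l 0)) in *.
  pose proof PI_RGT_0. pose proof (Cmod_ge_0 Sv).
  assert (hb0 : 0 < 8 * a / PI ^ 2) by (apply Rdiv_lt_0_compat; [lra|apply pow_lt; lra]).
  assert (hSM : 8 * a / PI ^ 2 / M <= 2 * Cmod Sv).
  { apply Rle_trans with (8 * a / PI ^ 2 * (X + Rabs (snd l)) / M ^ 2); [|nra].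
    apply (Rmult_le_reg_r (M ^ 2)); [apply pow_lt; lra|].
    replace (8 * a / PI ^ 2 / M * M ^ 2) with (8 * a / PI ^ 2 * M) by (field; lra).
    replace (8 * a / PI ^ 2 * (X + Rabs (snd l)) / M ^ 2 * M ^ 2)
      with (8 * a / PI ^ 2 * (X + Rabs (snd l))) by (field; lra).
    apply Rmult_le_compat_l; lra. }
  apply (Rmult_le_compat_r M) in hSM; [|lra].
  replace (8 * a / PI ^ 2 / M * M) with (8 * a / PI ^ 2) in hSM by (field; lra).
  assert (2 * Cmod Sv * M <= 2 * Cmod Sv * (K_mean * jomega_sq xi eta l))
    by (apply Rmult_le_compat_l; lra).
  lra.
Qed.

Lemma profile_mean_lower_oscillating Sv : in_S d1 d2 l ->
  is_series (fun n => one_seq n * press_profile n)%C Sv -> fst (symb a nu xi eta l 0) < 0 ->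
  8 * a / PI ^ 2 <= (1 + d1) ^ 2 * (Cmod Sv * jomega_sq xi eta l).
Proof.
  intros hS hSv hneg.
  destruct (exists_sign (snd l)) as [b [hb hb2]].
  pose proof (profile_mean_head_le 0 b Sv hS hSv) as h.
  replace (0 * fst (symb a nu xi eta l 0) + b * snd l) with (Rabs (snd l)) in h by (rewrite <- hb; ring).
  replace (0 ^ 2 + b ^ 2) with 1 in h by nra. rewrite sqrt_1, Rmult_1_l in h.
  specialize (h ltac:(intro n; rewrite hb; pose proof (Rabs_pos (snd l)); lra)).
  pose proof (Cmod_symb_pos 0 hS) as hM. pose proof (Cmod_symb_0_le_Im hS hneg) as hMY.
  assert (hYw : Rabs (snd l) <= jomega_sq xi eta l).
  { unfold jomega_sq. pose proof (Rabs_snd_le_Cmod l). pose proof (jzeta_ge1 xi eta). nra. }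
  set (M := Cmod (symb a nu xi eta l 0)) in *. set (Y := Rabs (snd l)) in *.
  assert (hY : 0 < Y) by nra. pose proof PI_RGT_0.
  pose proof (Cmod_ge_0 Sv).
  assert (8 * a / PI ^ 2 * Y <= Cmod Sv * M ^ 2).
  { apply (Rmult_le_compat_r (M ^ 2)) in h; [|apply pow2_ge_0].
    replace (8 * a / PI ^ 2 * Y / M ^ 2 * M ^ 2) with (8 * a / PI ^ 2 * Y) in h by (field; lra).
    exact h. }
  assert (M ^ 2 <= ((1 + d1) * Y) ^ 2) by (apply pow_incr; lra).
  assert (8 * a / PI ^ 2 * Y <= (1 + d1) ^ 2 * (Cmod Sv * Y) * Y) by nra.
  assert (8 * a / PI ^ 2 <= (1 + d1) ^ 2 * (Cmod Sv * Y)) by (apply (Rmult_le_reg_r Y); lra).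
  assert ((1 + d1) ^ 2 * (Cmod Sv * Y) <= (1 + d1) ^ 2 * (Cmod Sv * jomega_sq xi eta l)).
  { apply Rmult_le_compat_l; [apply pow2_ge_0|]. apply Rmult_le_compat_l; lra. }
  lra.
Qed.

Definition c_mean := 8 * a / PI ^ 2 / (2 * K_mean + (1 + d1) ^ 2).

Lemma c_mean_pos : 0 < c_mean.
Proof.
  unfold c_mean, K_mean. pose proof PI_RGT_0. pose proof (pow2_ge_0 (PI / a)).
  apply Rdiv_lt_0_compat; [apply Rdiv_lt_0_compat; [lra|apply pow_lt; lra]|].
  pose proof (pow2_ge_0 (1 + d1)). nra.
Qed.

(* the mean [int_0^a press_profile] is of size [<omega>^-2] *)
Lemma profile_mean_lower Sv : in_S d1 d2 l ->
  is_series (fun n => one_seq n * press_profile n)%C Sv -> c_mean <= Cmod Sv * jomega_sq xi eta l.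
Proof.
  intros hS hSv. pose proof (Cmod_ge_0 Sv). pose proof (jomega_sq_ge1 xi eta l).
  assert (hK : 0 < K_mean) by (unfold K_mean; pose proof (pow2_ge_0 (PI / a)); nra).
  pose proof (pow2_ge_0 (1 + d1)).
  assert (hD : 0 < 2 * K_mean + (1 + d1) ^ 2) by lra.
  unfold c_mean. apply (Rmult_le_reg_r (2 * K_mean + (1 + d1) ^ 2)); [exact hD|].
  replace (8 * a / PI ^ 2 / (2 * K_mean + (1 + d1) ^ 2) * (2 * K_mean + (1 + d1) ^ 2))
    with (8 * a / PI ^ 2) by (pose proof PI_RGT_0; field; split; lra).
  assert (0 <= Cmod Sv * jomega_sq xi eta l) by nra.
  destruct (Rle_dec 0 (fst (symb a nu xi eta l 0))) as [h|h].
  - pose proof (profile_mean_lower_dissipative Sv hS hSv h). nra.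
  - pose proof (profile_mean_lower_oscillating Sv hS hSv ltac:(lra)). nra.
Qed.

(** * Solving [L0] coefficientwise *)

Definition press_part (r : R) (p0 : C) (n : nat) : C := (- (Ci * RtoC r * p0) * press_profile n)%C.

Lemma mom_comp_solve r u p0 : in_S d1 d2 l ->
  u = seq_add (symb_div (mom_comp r u p0)) (press_part r p0).
Proof.
  intros hS. apply functional_extensionality. intro n.
  unfold seq_add, mom_comp, press_part, press_profile, symb_div, one_seq.
  field. apply symb_neq_0, hS.
Qed.

Lemma mom_comp_of_solution r f p0 : in_S d1 d2 l ->
  mom_comp r (seq_add (symb_div f) (press_part r p0)) p0 = f.
Proof.
  intros hS. apply functional_extensionality. intro n.
  unfold seq_add, mom_comp, press_part, press_profile, symb_div, one_seq.
  field. apply symb_neq_0, hS.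
Qed.

Lemma L0_3_solve t : in_S d1 d2 l -> t = symb_div (L0_3 a nu xi eta l t).
Proof.
  intros hS. apply functional_extensionality. intro n.
  unfold symb_div, L0_3. field. apply symb_neq_0, hS.
Qed.

Lemma L0_3_symb_div f : in_S d1 d2 l -> L0_3 a nu xi eta l (symb_div f) = f.
Proof.
  intros hS. apply functional_extensionality. intro n.
  unfold symb_div, L0_3. field. apply symb_neq_0, hS.
Qed.

Definition profile_dot (f1 f2 : nat -> C) (n : nat) : C :=
  (press_profile n * (RtoC (IZR xi) * f1 n + RtoC (IZR eta) * f2 n))%C.

Lemma div_term_eq u v p0 n : in_S d1 d2 l ->
  (RtoC (one_coef a n) * (RtoC (IZR xi) * u n + RtoC (IZR eta) * v n))%C
  = (profile_dot (mom_comp (IZR xi) u p0) (mom_comp (IZR eta) v p0) n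
     - Ci * p0 * RtoC (zeta_sq xi eta) * (one_seq n * press_profile n))%C.
Proof.
  intros hS. unfold profile_dot, mom_comp, press_profile, symb_div, one_seq, zeta_sq.
  rewrite RtoC_plus, !RtoC_pow. field. apply symb_neq_0, hS.
Qed.

Lemma div_free_iff u v p0 (T Sv : C) : in_S d1 d2 l ->
  is_series (profile_dot (mom_comp (IZR xi) u p0) (mom_comp (IZR eta) v p0)) T ->
  is_series (fun n => one_seq n * press_profile n)%C Sv ->
  div_free a xi eta u v <-> T = (Ci * p0 * RtoC (zeta_sq xi eta) * Sv)%C.
Proof.
  intros hS hT hSv.
  assert (hdiv : is_series
    (fun n => RtoC (one_coef a n) * (RtoC (IZR xi) * u n + RtoC (IZR eta) * v n))%C
    (T - Ci * p0 * RtoC (zeta_sq xi eta) * Sv)%C).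
  { eapply is_series_ext; [intro n; symmetry; apply div_term_eq, hS|].
    apply (is_series_minus _ _ _ _ hT).
    exact (is_series_scal (Ci * p0 * RtoC (zeta_sq xi eta))%C _ _ hSv). }
  unfold div_free. split.
  - intros h0.
    assert (e : (T - Ci * p0 * RtoC (zeta_sq xi eta) * Sv)%C = RtoC 0)
      by exact (is_series_C_unique _ _ _ hdiv h0).
    apply (f_equal (fun z => z + Ci * p0 * RtoC (zeta_sq xi eta) * Sv)%C) in e.
    rewrite Cplus_0_l in e. rewrite <- e. ring.
  - intros e. rewrite e in hdiv.
    replace (Ci * p0 * RtoC (zeta_sq xi eta) * Sv - Ci * p0 * RtoC (zeta_sq xi eta) * Sv)%C
      with (RtoC 0) in hdiv by ring.
    exact hdiv.
Qed.

Lemma hterm_symb_div_le s f n : in_S d1 d2 l ->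
  jomega_sq xi eta l ^ 2 * hterm nu xi eta s (symb_div f) n <= K_omega ^ 2 * hterm nu xi eta s f n /\
  hterm nu xi eta (s + 2) (symb_div f) n <= K_weight ^ 2 * hterm nu xi eta s f n.
Proof.
  intros hS. pose proof (Cmod_symb_pos n hS) as hM.
  pose proof (Rpower_pos (weight nu xi eta n) s) as hP.
  pose proof (weight_pos nu xi eta n ltac:(lra)) as hw.
  unfold hterm, symb_div. rewrite Cmod_div by (apply symb_neq_0, hS). split.
  - apply sq_mul_div_sq_le; try lra.
    + pose proof (jomega_sq_ge1 xi eta l). lra.
    + apply jomega_sq_le_Cmod_symb, hS.
  - replace (Rpower (weight nu xi eta n) (s + 2) * (Cmod (f n) / Cmod (symb a nu xi eta l n)) ^ 2)
      with (weight nu xi eta n ^ 2 *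
            (Rpower (weight nu xi eta n) s * (Cmod (f n) / Cmod (symb a nu xi eta l n)) ^ 2))
      by (rewrite Rpower_plus_2 by exact hw; ring).
    apply sq_mul_div_sq_le; try lra. apply weight_le_Cmod_symb, hS.
Qed.

Lemma symb_div_in_H s f : in_S d1 d2 l -> inH nu xi eta s f ->
  inH nu xi eta s (symb_div f) /\ inH nu xi eta (s + 2) (symb_div f) /\
  jomega_sq xi eta l ^ 2 * hsq nu xi eta s (symb_div f) <= K_omega ^ 2 * hsq nu xi eta s f /\
  hsq nu xi eta (s + 2) (symb_div f) <= K_weight ^ 2 * hsq nu xi eta s f.
Proof.
  intros hS hf. pose proof (jomega_sq_ge1 xi eta l) as hw.
  assert (hw2 : 0 < jomega_sq xi eta l ^ 2) by (apply pow_lt; lra).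
  destruct (series_le_scal (hterm nu xi eta s (symb_div f)) _ (K_omega ^ 2 / jomega_sq xi eta l ^ 2)
             ltac:(intro n; split; [apply hterm_nonneg|];
                   apply (Rmult_le_reg_l (jomega_sq xi eta l ^ 2)); [exact hw2|];
                   replace (jomega_sq xi eta l ^ 2 * (K_omega ^ 2 / jomega_sq xi eta l ^ 2
                              * hterm nu xi eta s f n))
                     with (K_omega ^ 2 * hterm nu xi eta s f n) by (field; lra);
                   apply hterm_symb_div_le, hS) hf) as [h1 e1].
  destruct (series_le_scal (hterm nu xi eta (s + 2) (symb_div f)) _ (K_weight ^ 2)
             ltac:(intro n; split; [apply hterm_nonneg|apply hterm_symb_div_le, hS]) hf) as [h2 e2].
  split; [exact h1|]. split; [exact h2|]. split; [|exact e2].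
  apply (Rmult_le_compat_l (jomega_sq xi eta l ^ 2)) in e1; [|lra].
  unfold hsq. replace (K_omega ^ 2 * Series (hterm nu xi eta s f)) with
    (jomega_sq xi eta l ^ 2 * (K_omega ^ 2 / jomega_sq xi eta l ^ 2 * Series (hterm nu xi eta s f)))
    by (field; lra).
  exact e1.
Qed.

Lemma symb_div_estimate s f : in_S d1 d2 l -> inH nu xi eta s f ->
  jomega_sq xi eta l * hnorm nu xi eta s (symb_div f) + hnorm nu xi eta (s + 2) (symb_div f)
    <= (K_omega + K_weight) * hnorm nu xi eta s f.
Proof.
  intros hS hf. destruct (symb_div_in_H s f hS hf) as [h1 [h2 [e1 e2]]].
  pose proof (hsq_nonneg _ _ _ _ _ hf) as hf0. pose proof (hsq_nonneg _ _ _ _ _ h1).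
  pose proof (jomega_sq_ge1 xi eta l). pose proof K_omega_pos. pose proof K_weight_pos.
  unfold hnorm.
  rewrite <- (sqrt_pow2 (jomega_sq xi eta l)), <- sqrt_mult by (try apply pow2_ge_0; lra).
  pose proof (sqrt_le_scal _ _ K_omega hf0 ltac:(lra) e1).
  pose proof (sqrt_le_scal _ _ K_weight hf0 ltac:(lra) e2). lra.
Qed.

Lemma symb_div_pair_estimate s f1 f2 : in_S d1 d2 l ->
  inH nu xi eta s f1 -> inH nu xi eta s f2 ->
  jomega_sq xi eta l * hnorm2 nu xi eta s (symb_div f1) (symb_div f2)
    + hnorm2 nu xi eta (s + 2) (symb_div f1) (symb_div f2)
    <= (K_omega + K_weight) * hnorm2 nu xi eta s f1 f2.
Proof.
  intros hS hf1 hf2.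
  destruct (symb_div_in_H s f1 hS hf1) as [h1 [_ [e1 e1']]].
  destruct (symb_div_in_H s f2 hS hf2) as [h2 [_ [e2 e2']]].
  pose proof (hsq_nonneg _ _ _ _ _ h1). pose proof (hsq_nonneg _ _ _ _ _ h2).
  pose proof (jomega_sq_ge1 xi eta l). pose proof K_omega_pos. pose proof K_weight_pos.
  pose proof (hnorm2_le_scal nu xi eta (s + 2) s _ _ _ _ K_weight hf1 hf2 ltac:(lra) e1' e2').
  assert (jomega_sq xi eta l * hnorm2 nu xi eta s (symb_div f1) (symb_div f2)
          <= K_omega * hnorm2 nu xi eta s f1 f2).
  { unfold hnorm2.
    rewrite <- (sqrt_pow2 (jomega_sq xi eta l)), <- sqrt_mult by (try apply pow2_ge_0; lra).
    pose proof (hsq_nonneg _ _ _ _ _ hf1). pose proof (hsq_nonneg _ _ _ _ _ hf2).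
    apply sqrt_le_scal; lra. }
  lra.
Qed.

Lemma press_part_in_H s r p0 : in_S d1 d2 l -> s < 5/2 ->
  inH nu xi eta s (press_part r p0) /\
  hsq nu xi eta s (press_part r p0)
    <= r ^ 2 * Cmod p0 ^ 2 * (K_profile (- s) * Ms xi eta l (- s) ^ 2).
Proof.
  intros hS hs. destruct (press_profile_in_H (- s) hS ltac:(lra)) as [hG eG].
  rewrite Ropp_involutive in hG, eG.
  destruct (inH_scal nu xi eta s (- (Ci * RtoC r * p0))%C _ hG) as [h e].
  split; [exact h|]. unfold press_part. rewrite e.
  rewrite Cmod_opp, !Cmod_mult, Cmod_Ci, Cmod_R, Rmult_1_l, !Rpow_mult_distr, pow2_abs.
  pose proof (pow2_ge_0 r). pose proof (pow2_ge_0 (Cmod p0)).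
  pose proof (Rmult_le_compat_l (r ^ 2 * Cmod p0 ^ 2) _ _ ltac:(nra) eG). lra.
Qed.

Lemma press_part_pair_estimate s p0 : in_S d1 d2 l -> s < 5/2 ->
  inH nu xi eta s (press_part (IZR xi) p0) /\ inH nu xi eta s (press_part (IZR eta) p0) /\
  hnorm2 nu xi eta s (press_part (IZR xi) p0) (press_part (IZR eta) p0)
    <= zeta_abs xi eta * Cmod p0 * (sqrt (K_profile (- s)) * Ms xi eta l (- s)).
Proof.
  intros hS hs.
  destruct (press_part_in_H s (IZR xi) p0 hS hs) as [h1 e1].
  destruct (press_part_in_H s (IZR eta) p0 hS hs) as [h2 e2].
  split; [exact h1|]. split; [exact h2|].
  pose proof (K_profile_pos (- s)). pose proof (Ms_pos xi eta l (- s) ltac:(lra)).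
  pose proof (Cmod_ge_0 p0). pose proof (sqrt_pos (K_profile (- s))).
  pose proof (sqrt_pos (zeta_sq xi eta)).
  unfold hnorm2. rewrite <- (Rmult_1_r (_ * _ * (_ * _))), <- sqrt_1.
  apply sqrt_le_scal; [lra|unfold zeta_abs; apply Rmult_le_pos; [nra|nra]|].
  rewrite Rmult_1_r, !Rpow_mult_distr, zeta_abs_sq, pow2_sqrt by lra. unfold zeta_sq.
  nra.
Qed.

Lemma profile_dot_series s f1 f2 : in_S d1 d2 l -> -5/2 < s ->
  inH nu xi eta s f1 -> inH nu xi eta s f2 ->
  exists T : C, is_series (profile_dot f1 f2) T /\
    Cmod T <= sqrt (K_profile s) * Ms xi eta l s * (zeta_abs xi eta * hnorm2 nu xi eta s f1 f2).
Proof.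
  intros hS hs hf1 hf2.
  destruct (press_profile_in_H s hS hs) as [hG eG].
  destruct (series_Cmod_dual_le nu xi eta s _ _ _ hG hf1 hf2) as [hex hle].
  destruct (ex_series_C_of_Cmod _ hex) as [T hT].
  exists T. split; [exact hT|].
  eapply Rle_trans; [apply (Cmod_is_series_le _ _ hT hex)|]. eapply Rle_trans; [exact hle|].
  pose proof (hsq_nonneg _ _ _ _ _ hf1). pose proof (hsq_nonneg _ _ _ _ _ hf2).
  pose proof (hsq_nonneg _ _ _ _ _ hG). pose proof (K_profile_pos s).
  pose proof (Ms_pos xi eta l s hs). pose proof (zeta_abs_ge1 xi eta hz).
  unfold hnorm2. rewrite <- (Rmult_1_r (_ * _ * (_ * _))), <- sqrt_1.
  apply sqrt_le_scal; [lra| |].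
  { pose proof (sqrt_pos (K_profile s)).
    pose proof (sqrt_pos (hsq nu xi eta s f1 + hsq nu xi eta s f2)).
    apply Rmult_le_pos; apply Rmult_le_pos; lra. }
  rewrite Rmult_1_r, !Rpow_mult_distr, zeta_abs_sq, !pow2_sqrt by lra.
  assert (hq : 0 <= zeta_sq xi eta * (hsq nu xi eta s f1 + hsq nu xi eta s f2)) by nra.
  pose proof (Rmult_le_compat_r _ _ _ hq eG). nra.
Qed.

Lemma profile_mean_series : in_S d1 d2 l ->
  exists Sv : C, is_series (fun n => one_seq n * press_profile n)%C Sv /\
    c_mean <= Cmod Sv * jomega_sq xi eta l.
Proof.
  intros hS. destruct (ex_series_C_of_Cmod _ (ex_series_Cmod_one_profile hS)) as [Sv hSv].
  exists Sv. split; [exact hSv|apply profile_mean_lower; assumption].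
Qed.

Definition C_press s := sqrt (K_profile s) / c_mean.

Lemma pressure_estimate s u v p0 : in_S d1 d2 l -> -5/2 < s ->
  inH nu xi eta s (mom_comp (IZR xi) u p0) -> inH nu xi eta s (mom_comp (IZR eta) v p0) ->
  div_free a xi eta u v ->
  zeta_abs xi eta * Cmod p0 <= C_press s * jomega_sq xi eta l * Ms xi eta l s *
    hnorm2 nu xi eta s (mom_comp (IZR xi) u p0) (mom_comp (IZR eta) v p0).
Proof.
  intros hS hs hf1 hf2 hdiv.
  destruct (profile_dot_series s _ _ hS hs hf1 hf2) as [T [hT hTle]].
  destruct (profile_mean_series hS) as [Sv [hSv hSvle]].
  set (nF := hnorm2 nu xi eta s (mom_comp (IZR xi) u p0) (mom_comp (IZR eta) v p0)) in *.
  apply (div_free_iff u v p0 T Sv hS hT hSv) in hdiv.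
  assert (hTmod : Cmod T = zeta_abs xi eta * (zeta_abs xi eta * Cmod p0) * Cmod Sv).
  { rewrite hdiv, !Cmod_mult, Cmod_Ci, Cmod_R, <- zeta_abs_sq.
    pose proof (zeta_abs_ge1 xi eta hz). rewrite Rabs_right by nra. ring. }
  pose proof (zeta_abs_ge1 xi eta hz) as hza. pose proof c_mean_pos. pose proof (Cmod_ge_0 p0).
  pose proof (jomega_sq_ge1 xi eta l). pose proof (Cmod_ge_0 Sv).
  assert (hP : zeta_abs xi eta * Cmod p0 * Cmod Sv
               <= sqrt (K_profile s) * Ms xi eta l s * nF).
  { apply (Rmult_le_reg_l (zeta_abs xi eta)); [lra|]. nra. }
  unfold C_press. apply (Rmult_le_reg_r c_mean); [lra|].
  replace (sqrt (K_profile s) / c_mean * jomega_sq xi eta l * Ms xi eta l s * nF * c_mean)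
    with (sqrt (K_profile s) * Ms xi eta l s * nF * jomega_sq xi eta l) by (field; lra).
  apply Rle_trans with (zeta_abs xi eta * Cmod p0 * Cmod Sv * jomega_sq xi eta l).
  - replace (zeta_abs xi eta * Cmod p0 * Cmod Sv * jomega_sq xi eta l)
      with (zeta_abs xi eta * Cmod p0 * (Cmod Sv * jomega_sq xi eta l)) by ring.
    apply Rmult_le_compat_l; [nra|exact hSvle].
  - apply Rmult_le_compat_r; lra.
Qed.

Lemma pressure_unique s u v p0 u' v' p0' : in_S d1 d2 l -> -5/2 < s ->
  inH nu xi eta s (mom_comp (IZR xi) u p0) -> inH nu xi eta s (mom_comp (IZR eta) v p0) ->
  div_free a xi eta u v -> div_free a xi eta u' v' ->
  mom_comp (IZR xi) u p0 = mom_comp (IZR xi) u' p0' ->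
  mom_comp (IZR eta) v p0 = mom_comp (IZR eta) v' p0' -> p0 = p0'.
Proof.
  intros hS hs hf1 hf2 hdiv hdiv' e1 e2.
  destruct (profile_dot_series s _ _ hS hs hf1 hf2) as [T [hT _]].
  destruct (profile_mean_series hS) as [Sv [hSv hSvle]].
  pose proof (proj1 (div_free_iff u v p0 T Sv hS hT hSv) hdiv) as r1.
  rewrite e1, e2 in hT.
  pose proof (proj1 (div_free_iff u' v' p0' T Sv hS hT hSv) hdiv') as r2.
  assert (hSv0 : Sv <> 0%C).
  { intro h0. pose proof c_mean_pos. rewrite h0, Cmod_0 in hSvle. lra. }
  assert (hz0 : RtoC (zeta_sq xi eta) <> 0%C) by (intro h0; injection h0; lra).
  transitivity (T / (Ci * RtoC (zeta_sq xi eta) * Sv))%C; [rewrite r1|rewrite r2];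
    field; repeat split; auto; exact Ci_nz.
Qed.

Lemma L0_injective s : in_S d1 d2 l -> -5/2 < s < 1/2 ->
  forall u v p0 t u' v' p0' t',
    in_dom a nu xi eta s u v t -> in_dom a nu xi eta s u' v' t' ->
    L0_1 a nu xi eta l u p0 = L0_1 a nu xi eta l u' p0' ->
    L0_2 a nu xi eta l v p0 = L0_2 a nu xi eta l v' p0' ->
    L0_3 a nu xi eta l t = L0_3 a nu xi eta l t' ->
    u = u' /\ v = v' /\ p0 = p0' /\ t = t'.
Proof.
  intros hS hs u v p0 t u' v' p0' t' [hu [hv [hdiv ht]]] [_ [_ [hdiv' _]]] e1 e2 e3.
  change (L0_1 a nu xi eta l) with (mom_comp (IZR xi)) in e1.
  change (L0_2 a nu xi eta l) with (mom_comp (IZR eta)) in e2.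
  assert (hp : p0 = p0').
  { apply (pressure_unique s u v p0 u' v' p0' hS ltac:(lra)); auto.
    - exact (proj1 (mom_comp_in_H s _ u p0 ltac:(lra) hu)).
    - exact (proj1 (mom_comp_in_H s _ v p0 ltac:(lra) hv)). }
  subst p0'. split; [|split; [|split]]; [| |reflexivity|].
  - rewrite (mom_comp_solve (IZR xi) u p0 hS), (mom_comp_solve (IZR xi) u' p0 hS), e1.
    reflexivity.
  - rewrite (mom_comp_solve (IZR eta) v p0 hS), (mom_comp_solve (IZR eta) v' p0 hS), e2.
    reflexivity.
  - rewrite (L0_3_solve t hS), (L0_3_solve t' hS), e3. reflexivity.
Qed.

Lemma velocity_solution_in_H s r f p0 : in_S d1 d2 l -> s < 1/2 -> inH nu xi eta s f ->
  inH nu xi eta (s + 2) (seq_add (symb_div f) (press_part r p0)).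
Proof.
  intros hS hs hf. apply inH_add.
  - exact (proj1 (proj2 (symb_div_in_H s f hS hf))).
  - exact (proj1 (press_part_in_H (s + 2) r p0 hS ltac:(lra))).
Qed.

Lemma L0_surjective s : in_S d1 d2 l -> -5/2 < s < 1/2 ->
  forall f1 f2 f3, inH nu xi eta s f1 -> inH nu xi eta s f2 -> inH nu xi eta s f3 ->
    exists u v p0 t, in_dom a nu xi eta s u v t /\
      L0_1 a nu xi eta l u p0 = f1 /\ L0_2 a nu xi eta l v p0 = f2 /\
      L0_3 a nu xi eta l t = f3.
Proof.
  intros hS hs f1 f2 f3 hf1 hf2 hf3.
  destruct (profile_dot_series s _ _ hS ltac:(lra) hf1 hf2) as [T [hT _]].
  destruct (profile_mean_series hS) as [Sv [hSv hSvle]].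
  assert (hSv0 : Sv <> 0%C).
  { intro h0. pose proof c_mean_pos. rewrite h0, Cmod_0 in hSvle. lra. }
  assert (hz0 : RtoC (zeta_sq xi eta) <> 0%C) by (intro h0; injection h0; lra).
  set (p0 := (T / (Ci * RtoC (zeta_sq xi eta) * Sv))%C).
  exists (seq_add (symb_div f1) (press_part (IZR xi) p0)),
         (seq_add (symb_div f2) (press_part (IZR eta) p0)), p0, (symb_div f3).
  change (L0_1 a nu xi eta l) with (mom_comp (IZR xi)).
  change (L0_2 a nu xi eta l) with (mom_comp (IZR eta)).
  rewrite !mom_comp_of_solution, L0_3_symb_div by exact hS.
  split; [|auto]. split; [apply velocity_solution_in_H; auto; lra|].
  split; [apply velocity_solution_in_H; auto; lra|].
  split; [|exact (proj1 (proj2 (symb_div_in_H s f3 hS hf3)))].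
  rewrite <- (mom_comp_of_solution (IZR xi) f1 p0 hS),
          <- (mom_comp_of_solution (IZR eta) f2 p0 hS) in hT.
  apply (div_free_iff _ _ p0 T Sv hS hT hSv).
  unfold p0. field. repeat split; auto. exact Ci_nz.
Qed.

(* the splitting [Y = Y1 + Y2]: [Y1] is the pressure part, [Y2 = F / symb] *)
Lemma velocity_split s u v p0 : in_S d1 d2 l -> -5/2 < s < 1/2 ->
  inH nu xi eta s (mom_comp (IZR xi) u p0) -> inH nu xi eta s (mom_comp (IZR eta) v p0) ->
  div_free a xi eta u v ->
  let f1 := mom_comp (IZR xi) u p0 in
  let f2 := mom_comp (IZR eta) v p0 in
  let nF := hnorm2 nu xi eta s f1 f2 in
  let w2 := jomega_sq xi eta l in
  exists u1 v1 u2 v2 : nat -> C,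
    inH nu xi eta (s + 2) u1 /\ inH nu xi eta (s + 2) v1 /\
    inH nu xi eta (s + 2) u2 /\ inH nu xi eta (s + 2) v2 /\
    u = seq_add u1 u2 /\ v = seq_add v1 v2 /\
    Ms xi eta l (- s - 2) / Ms xi eta l (- s) * hnorm2 nu xi eta s u1 v1
      + hnorm2 nu xi eta (s + 2) u1 v1
      <= C_press s * (sqrt (K_profile (- s)) + sqrt (K_profile (- s - 2)))
         * w2 * Ms xi eta l s * Ms xi eta l (- s - 2) * nF /\
    w2 * hnorm2 nu xi eta s u2 v2 + hnorm2 nu xi eta (s + 2) u2 v2 <= (K_omega + K_weight) * nF.
Proof.
  intros hS hs hf1 hf2 hdiv f1 f2 nF w2.
  destruct (press_part_pair_estimate s p0 hS ltac:(lra)) as [_ [_ hY1]].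
  destruct (press_part_pair_estimate (s + 2) p0 hS ltac:(lra)) as [hu1 [hv1 hY1']].
  replace (- (s + 2)) with (- s - 2) in hY1' by ring.
  destruct (symb_div_in_H s f1 hS hf1) as [_ [hu2 _]].
  destruct (symb_div_in_H s f2 hS hf2) as [_ [hv2 _]].
  exists (press_part (IZR xi) p0), (press_part (IZR eta) p0), (symb_div f1), (symb_div f2).
  do 4 (split; [assumption|]).
  split; [rewrite seq_add_comm; apply mom_comp_solve, hS|].
  split; [rewrite seq_add_comm; apply mom_comp_solve, hS|].
  split; [|apply symb_div_pair_estimate; assumption].
  pose proof (pressure_estimate s u v p0 hS ltac:(lra) hf1 hf2 hdiv) as hp. fold f1 f2 nF w2 in hp.
  pose proof (Ms_pos xi eta l (- s) ltac:(lra)). pose proof (Ms_pos xi eta l (- s - 2) ltac:(lra)).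
  pose proof (sqrt_pos (K_profile (- s))). pose proof (sqrt_pos (K_profile (- s - 2))).
  set (P := zeta_abs xi eta * Cmod p0) in *.
  assert (hP : 0 <= P)
    by (pose proof (zeta_abs_ge1 xi eta hz); pose proof (Cmod_ge_0 p0); unfold P; nra).
  apply Rle_trans with (P * (sqrt (K_profile (- s)) + sqrt (K_profile (- s - 2)))
                          * Ms xi eta l (- s - 2)).
  - apply Rle_trans with (Ms xi eta l (- s - 2) / Ms xi eta l (- s)
        * (P * (sqrt (K_profile (- s)) * Ms xi eta l (- s)))
        + P * (sqrt (K_profile (- s - 2)) * Ms xi eta l (- s - 2))).
    + apply Rplus_le_compat; [|exact hY1'].
      apply Rmult_le_compat_l; [apply Rlt_le, Rdiv_lt_0_compat; lra|exact hY1].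
    + right. field. lra.
  - replace (C_press s * (sqrt (K_profile (- s)) + sqrt (K_profile (- s - 2)))
             * w2 * Ms xi eta l s * Ms xi eta l (- s - 2) * nF)
      with (C_press s * w2 * Ms xi eta l s * nF
            * (sqrt (K_profile (- s)) + sqrt (K_profile (- s - 2))) * Ms xi eta l (- s - 2))
      by ring.
    apply Rmult_le_compat_r; [lra|]. apply Rmult_le_compat_r; [lra|exact hp].
Qed.

Definition C_L0 s :=
  C_press s * (1 + sqrt (K_profile (- s)) + sqrt (K_profile (- s - 2))) + K_omega + K_weight.

Lemma L0_estimates s : in_S d1 d2 l -> -5/2 < s < 1/2 ->
  forall u v p0 t, in_dom a nu xi eta s u v t ->
    let f1 := L0_1 a nu xi eta l u p0 in
    let f2 := L0_2 a nu xi eta l v p0 in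
    let f3 := L0_3 a nu xi eta l t in
    let nF := hnorm2 nu xi eta s f1 f2 in
    let w2 := jomega_sq xi eta l in
    zeta_abs xi eta * Cmod p0 <= C_L0 s * w2 * Ms xi eta l s * nF /\
    (exists u1 v1 u2 v2 : nat -> C,
       inH nu xi eta (s + 2) u1 /\ inH nu xi eta (s + 2) v1 /\
       inH nu xi eta (s + 2) u2 /\ inH nu xi eta (s + 2) v2 /\
       u = seq_add u1 u2 /\ v = seq_add v1 v2 /\
       Ms xi eta l (- s - 2) / Ms xi eta l (- s) * hnorm2 nu xi eta s u1 v1
         + hnorm2 nu xi eta (s + 2) u1 v1
         <= C_L0 s * w2 * Ms xi eta l s * Ms xi eta l (- s - 2) * nF /\
       w2 * hnorm2 nu xi eta s u2 v2 + hnorm2 nu xi eta (s + 2) u2 v2 <= C_L0 s * nF) /\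
    w2 * hnorm nu xi eta s t + hnorm nu xi eta (s + 2) t <= C_L0 s * hnorm nu xi eta s f3.
Proof.
  intros hS hs u v p0 t [hu [hv [hdiv ht]]] f1 f2 f3 nF w2.
  assert (hf1 : inH nu xi eta s f1) by exact (proj1 (mom_comp_in_H s _ u p0 ltac:(lra) hu)).
  assert (hf2 : inH nu xi eta s f2) by exact (proj1 (mom_comp_in_H s _ v p0 ltac:(lra) hv)).
  assert (hf3 : inH nu xi eta s f3) by exact (proj1 (L0_3_in_H s t ht)).
  pose proof (Ms_pos xi eta l s ltac:(lra)). pose proof (Ms_pos xi eta l (- s - 2) ltac:(lra)).
  assert (hw2 : 1 <= w2) by apply jomega_sq_ge1. assert (hnF : 0 <= nF) by apply sqrt_pos.
  assert (0 <= hnorm nu xi eta s f3) by apply sqrt_pos.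
  pose proof (sqrt_pos (K_profile (- s))). pose proof (sqrt_pos (K_profile (- s - 2))).
  assert (hCp : 0 <= C_press s)
    by (apply Rmult_le_pos; [apply sqrt_pos|apply Rlt_le, Rinv_0_lt_compat, c_mean_pos]).
  pose proof K_omega_pos. pose proof K_weight_pos.
  assert (0 <= C_press s * (sqrt (K_profile (- s)) + sqrt (K_profile (- s - 2))))
    by (apply Rmult_le_pos; lra).
  assert (hK1 : C_press s <= C_L0 s) by (unfold C_L0; nra).
  assert (hK2 : C_press s * (sqrt (K_profile (- s)) + sqrt (K_profile (- s - 2))) <= C_L0 s)
    by (unfold C_L0; nra).
  assert (hK3 : K_omega + K_weight <= C_L0 s) by (unfold C_L0; nra).
  split; [|split].
  - eapply Rle_trans; [exact (pressure_estimate s u v p0 hS ltac:(lra) hf1 hf2 hdiv)|].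
    do 3 (apply Rmult_le_compat_r; [lra|]). exact hK1.
  - destruct (velocity_split s u v p0 hS hs hf1 hf2 hdiv)
      as [u1 [v1 [u2 [v2 [h1 [h2 [h3 [h4 [e1 [e2 [hb hc]]]]]]]]]]].
    exists u1, v1, u2, v2. do 6 (split; [assumption|]). split.
    + eapply Rle_trans; [exact hb|]. do 4 (apply Rmult_le_compat_r; [lra|]). exact hK2.
    + eapply Rle_trans; [exact hc|]. apply Rmult_le_compat_r; [lra|exact hK3].
  - rewrite (L0_3_solve t hS). fold f3.
    eapply Rle_trans; [exact (symb_div_estimate s f3 hS hf3)|]. apply Rmult_le_compat_r; lra.
Qed.

End Resolvent.

Theorem theorem2 (a nu d1 d2 sg : R)
  (ha : 0 < a) (hnu : 0 < nu) (hd1 : 0 < d1)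
  (hd2 : 0 < d2) (hd2' : d2 < Rmin (nu * PI ^ 2 / (2 * a ^ 2)) (nu / 2))
  (hsg : -3/2 < sg < 1/2) (hsg' : sg <> -1/2) :
  exists Cst : R,
  forall (l : C) (xi eta : Z),
    in_S d1 d2 l -> (xi, eta) <> (0%Z, 0%Z) ->
    (* L_0 maps the domain into (H^sg_zeta)^3 *)
    (forall u v p0 t, in_dom a nu xi eta sg u v t ->
       inH nu xi eta sg (L0_1 a nu xi eta l u p0)
       /\ inH nu xi eta sg (L0_2 a nu xi eta l v p0)
       /\ inH nu xi eta sg (L0_3 a nu xi eta l t)) /\
    (* continuity *)
    (forall u v p0 t, in_dom a nu xi eta sg u v t ->
       forall eps, 0 < eps -> exists del, 0 < del /\
       forall u' v' p0' t', in_dom a nu xi eta sg u' v' t' ->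
         dom_norm nu xi eta sg (seq_sub u u') (seq_sub v v') (Cminus p0 p0') (seq_sub t t') < del ->
         hnorm3 nu xi eta sg
           (seq_sub (L0_1 a nu xi eta l u p0) (L0_1 a nu xi eta l u' p0'))
           (seq_sub (L0_2 a nu xi eta l v p0) (L0_2 a nu xi eta l v' p0'))
           (seq_sub (L0_3 a nu xi eta l t) (L0_3 a nu xi eta l t')) < eps) /\
    (* injectivity *)
    (forall u v p0 t u' v' p0' t',
       in_dom a nu xi eta sg u v t -> in_dom a nu xi eta sg u' v' t' ->
       L0_1 a nu xi eta l u p0 = L0_1 a nu xi eta l u' p0' ->
       L0_2 a nu xi eta l v p0 = L0_2 a nu xi eta l v' p0' ->
       L0_3 a nu xi eta l t = L0_3 a nu xi eta l t' ->
       u = u' /\ v = v' /\ p0 = p0' /\ t = t') /\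
    (* surjectivity *)
    (forall f1 f2 f3, inH nu xi eta sg f1 -> inH nu xi eta sg f2 -> inH nu xi eta sg f3 ->
       exists u v p0 t, in_dom a nu xi eta sg u v t /\
         L0_1 a nu xi eta l u p0 = f1 /\ L0_2 a nu xi eta l v p0 = f2 /\
         L0_3 a nu xi eta l t = f3) /\
    (* estimates *)
    (forall u v p0 t, in_dom a nu xi eta sg u v t ->
       let f1 := L0_1 a nu xi eta l u p0 in
       let f2 := L0_2 a nu xi eta l v p0 in
       let f3 := L0_3 a nu xi eta l t in
       let nF := hnorm2 nu xi eta sg f1 f2 in
       let w2 := jomega_sq xi eta l in
       (* (a) *)
       zeta_abs xi eta * Cmod p0 <= Cst * w2 * Ms xi eta l sg * nF /\
       (exists u1 v1 u2 v2 : nat -> C,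
          inH nu xi eta (sg + 2) u1 /\ inH nu xi eta (sg + 2) v1 /\
          inH nu xi eta (sg + 2) u2 /\ inH nu xi eta (sg + 2) v2 /\
          u = seq_add u1 u2 /\ v = seq_add v1 v2 /\
          (* (b) *)
          Ms xi eta l (- sg - 2) / Ms xi eta l (- sg) * hnorm2 nu xi eta sg u1 v1
            + hnorm2 nu xi eta (sg + 2) u1 v1
            <= Cst * w2 * Ms xi eta l sg * Ms xi eta l (- sg - 2) * nF /\
          (* (c) *)
          w2 * hnorm2 nu xi eta sg u2 v2 + hnorm2 nu xi eta (sg + 2) u2 v2 <= Cst * nF) /\
       (* (d) *)
       w2 * hnorm nu xi eta sg t + hnorm nu xi eta (sg + 2) t
         <= Cst * hnorm nu xi eta sg f3).
Proof.
  assert (hd2nu : d2 < nu / 2) by (pose proof (Rmin_r (nu * PI ^ 2 / (2 * a ^ 2)) (nu / 2)); lra).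
  assert (hs : -5/2 < sg < 1/2) by lra.
  exists (C_L0 a nu d1 sg). intros l xi eta hS hne.
  pose proof (zeta_sq_ge1 xi eta hne) as hz.
  split; [|split; [|split; [|split]]].
  - exact (L0_maps_into a nu ha hnu xi eta l hz sg ltac:(lra)).
  - exact (L0_continuous a nu ha hnu xi eta l hz sg ltac:(lra)).
  - exact (L0_injective a nu ha hnu xi eta l hz d1 d2 hd1 hd2 hd2nu sg hS hs).
  - exact (L0_surjective a nu ha hnu xi eta l hz d1 d2 hd1 hd2 hd2nu sg hS hs).
  - exact (L0_estimates a nu ha hnu xi eta l hz d1 d2 hd1 hd2 hd2nu sg hS hs).
Qed.
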